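(* Let $G$ be a group. In $G\mathbf{Cat}$: (i) any composite of Dwyer $G$-maps is a Dwyer $G$-map; (ii) any coproduct of Dwyer $G$-maps is a Dwyer $G$-map; (iii) if $j\colon\mathcal{K}\to\mathcal{L}$ is a Dwyer $G$-map and $f\colon\mathcal{K}\to\mathcal{C}$ is a $G$-functor, then the pushout $k\colon\mathcal{C}\to\mathcal{D}$ of $j$ along $f$ (in $G\mathbf{Cat}$) is a Dwyer $G$-map; (iv) for a sequence of Dwyer $G$-maps $\mathcal{C}_n\to\mathcal{C}_{n+1}$, $n\ge0$, the induced map $\mathcal{C}_0\to\operatorname{colim}_n\mathcal{C}_n$ is a Dwyer $G$-map. The same four statements hold for Dwyer $G$-maps in $G\mathbf{Pos}$.
   Context: A subcategory $\mathcal{S}$ of $\mathcal{C}$ is a sieve if for every morphism $f\colon c\to s$ with $s\in\mathcal{S}$, $c$ and $f$ lie in $\mathcal{S}$; a cosieve if for every $f\colon s\to c$ with $s\in\mathcal{S}$, $c$ and $f$ lie in $\mathcal{S}$. A Dwyer $G$-map is a $G$-functor $k\colon\mathcal{S}\to\mathcal{C}$ between $G$-categories that is the inclusion of a sieve and factors as $\mathcal{S}\xrightarrow{i}\mathcal{T}\xrightarrow{j}\mathcal{C}$ in $G\mathbf{Cat}$, with $j$ the inclusion of a cosieve and $i$ an inclusion with an equivariant right adjoint $r\colon\mathcal{T}\to\mathcal{S}$ whose unit $\mathrm{id}\to r\circ i$ is the identity. $G\mathbf{Pos}$ is the full subcategory of $G$-categories that are posets. *)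

Set Implicit Arguments.
Unset Strict Implicit.

Record Group := {
  gcar :> Type;
  gmul : gcar -> gcar -> gcar;
  gone : gcar;
  ginv : gcar -> gcar;
  gassoc : forall a b c, gmul a (gmul b c) = gmul (gmul a b) c;
  gone_l : forall a, gmul gone a = a;
  gone_r : forall a, gmul a gone = a;
  ginv_l : forall a, gmul (ginv a) a = gone;
  ginv_r : forall a, gmul a (ginv a) = gone }.

(* comp g f is "g after f", meaningful when cod f = dom g. *)
Record Cat := {
  Ob : Type;
  Mor : Type;
  dom : Mor -> Ob;
  cod : Mor -> Ob;
  idm : Ob -> Mor;
  comp : Mor -> Mor -> Mor;
  dom_idm : forall x, dom (idm x) = x;
  cod_idm : forall x, cod (idm x) = x;
  dom_comp : forall f g, cod f = dom g -> dom (comp g f) = dom f;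
  cod_comp : forall f g, cod f = dom g -> cod (comp g f) = cod g;
  comp_id_l : forall f, comp (idm (cod f)) f = f;
  comp_id_r : forall f, comp f (idm (dom f)) = f;
  comp_assoc : forall f g h, cod f = dom g -> cod g = dom h ->
      comp h (comp g f) = comp (comp h g) f }.

Arguments dom {c} _.
Arguments cod {c} _.
Arguments idm {c} _.
Arguments comp {c} _ _.

Record Functor (C D : Cat) := {
  fob : Ob C -> Ob D;
  fmor : Mor C -> Mor D;
  f_dom : forall m, dom (fmor m) = fob (dom m);
  f_cod : forall m, cod (fmor m) = fob (cod m);
  f_id : forall x, fmor (idm x) = idm (fob x);
  f_comp : forall f g, cod f = dom g -> fmor (comp g f) = comp (fmor g) (fmor f) }.

Arguments fob {C D} _ _.
Arguments fmor {C D} _ _.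

Record GCat (G : Group) := {
  gc :> Cat;
  aob : G -> Ob gc -> Ob gc;
  amor : G -> Mor gc -> Mor gc;
  amor_dom : forall g m, dom (amor g m) = aob g (dom m);
  amor_cod : forall g m, cod (amor g m) = aob g (cod m);
  amor_id : forall g x, amor g (idm x) = idm (aob g x);
  amor_comp : forall g f h, cod f = dom h ->
      amor g (comp h f) = comp (amor g h) (amor g f);
  aob_one : forall x, aob (@gone G) x = x;
  amor_one : forall m, amor (@gone G) m = m;
  aob_mul : forall (g h : G) x, aob (@gmul G g h) x = aob g (aob h x);
  amor_mul : forall (g h : G) m, amor (@gmul G g h) m = amor g (amor h m) }.

Arguments aob {G} _ _ _.
Arguments amor {G} _ _ _.

Record GFunctor (G : Group) (X Y : GCat G) := {
  gf :> Functor X Y;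
  gf_ob : forall g x, fob gf (aob X g x) = aob Y g (fob gf x);
  gf_mor : forall g m, fmor gf (amor X g m) = amor Y g (fmor gf m) }.

Arguments gf {G X Y} _.

Definition compF (C D E : Cat) (F2 : Functor D E) (F1 : Functor C D) : Functor C E.
Proof.
  refine {| fob := fun x => fob F2 (fob F1 x);
            fmor := fun m => fmor F2 (fmor F1 m) |}.
  - intro m. rewrite f_dom, f_dom. reflexivity.
  - intro m. rewrite f_cod, f_cod. reflexivity.
  - intro x. rewrite f_id, f_id. reflexivity.
  - intros f g H. rewrite f_comp by exact H.
    apply f_comp. rewrite f_cod, f_dom, H. reflexivity.
Defined.

Definition compGF (G : Group) (X Y Z : GCat G)
  (F2 : GFunctor Y Z) (F1 : GFunctor X Y) : GFunctor X Z.
Proof.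
  refine {| gf := compF F2 F1 |}.
  - intros g x; simpl. rewrite gf_ob, gf_ob. reflexivity.
  - intros g m; simpl. rewrite gf_mor, gf_mor. reflexivity.
Defined.

Definition FCompEq (C D E : Cat) (v : Functor D E) (u : Functor C D)
  (w : Functor C E) : Prop :=
  (forall x, fob v (fob u x) = fob w x) /\ (forall m, fmor v (fmor u m) = fmor w m).

Definition FEq (C D : Cat) (u v : Functor C D) : Prop :=
  (forall x, fob u x = fob v x) /\ (forall m, fmor u m = fmor v m).

Definition IsInclusion (C D : Cat) (k : Functor C D) : Prop :=
  (forall x y, fob k x = fob k y -> x = y) /\
  (forall f g, fmor k f = fmor k g -> f = g).

Definition IsSieveInclusion (C D : Cat) (k : Functor C D) : Prop :=
  IsInclusion k /\
  (forall (s : Ob C) (f : Mor D), cod f = fob k s -> exists f', fmor k f' = f).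

Definition IsCosieveInclusion (C D : Cat) (k : Functor C D) : Prop :=
  IsInclusion k /\
  (forall (s : Ob C) (f : Mor D), dom f = fob k s -> exists f', fmor k f' = f).

(* r : T -> S is right adjoint to i : S -> T with unit id -> r o i equal to
   the identity: r o i = id_S, and a counit eps : i o r -> id_T (natural)
   satisfying the triangle identities (which, the unit being the identity,
   read eps_{i s} = id and r(eps_t) = id). *)
Definition IsRightAdjointIdUnit (S T : Cat) (i : Functor S T) (r : Functor T S)
  : Prop :=
  (forall s, fob r (fob i s) = s) /\
  (forall m, fmor r (fmor i m) = m) /\
  exists eps : Ob T -> Mor T,
    (forall t, dom (eps t) = fob i (fob r t)) /\
    (forall t, cod (eps t) = t) /\
    (forall f : Mor T, comp f (eps (dom f)) = comp (eps (cod f)) (fmor i (fmor r f))) /\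
    (forall s, eps (fob i s) = idm (fob i s)) /\
    (forall t, fmor r (eps t) = idm (fob r t)).

Definition IsDwyer (G : Group) (S C : GCat G) (k : GFunctor S C) : Prop :=
  IsSieveInclusion k /\
  exists (T : GCat G) (i : GFunctor S T) (j : GFunctor T C) (r : GFunctor T S),
    FCompEq j i k /\ IsCosieveInclusion j /\ IsInclusion i /\
    IsRightAdjointIdUnit i r.

Definition IsPoset (C : Cat) : Prop :=
  (forall f g : Mor C, dom f = dom g -> cod f = cod g -> f = g) /\
  (forall f g : Mor C, dom f = cod g -> cod f = dom g -> dom f = cod f).

Definition inGCat (G : Group) (X : GCat G) : Prop := True.
Definition inGPos (G : Group) (X : GCat G) : Prop := IsPoset X.

Section Univ.
Variable G : Group.
Variable P : GCat G -> Prop.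

Definition IsPushout (K L C D : GCat G) (j : GFunctor K L) (f : GFunctor K C)
  (k : GFunctor C D) (h : GFunctor L D) : Prop :=
  P D /\
  (forall x, fob k (fob f x) = fob h (fob j x)) /\
  (forall m, fmor k (fmor f m) = fmor h (fmor j m)) /\
  (forall (X : GCat G), P X -> forall (a : GFunctor C X) (b : GFunctor L X),
     (forall x, fob a (fob f x) = fob b (fob j x)) ->
     (forall m, fmor a (fmor f m) = fmor b (fmor j m)) ->
     (exists u : GFunctor D X, FCompEq u k a /\ FCompEq u h b) /\
     (forall u u' : GFunctor D X, FCompEq u k a -> FCompEq u h b ->
        FCompEq u' k a -> FCompEq u' h b -> FEq u u')).

Definition IsCoproduct (I : Type) (S : I -> GCat G) (Q : GCat G)
  (iota : forall i, GFunctor (S i) Q) : Prop :=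
  P Q /\
  (forall (X : GCat G), P X -> forall (a : forall i, GFunctor (S i) X),
     (exists u : GFunctor Q X, forall i, FCompEq u (iota i) (a i)) /\
     (forall u u' : GFunctor Q X, (forall i, FCompEq u (iota i) (a i)) ->
        (forall i, FCompEq u' (iota i) (a i)) -> FEq u u')).

Definition IsSeqColim (C : nat -> GCat G) (k : forall n, GFunctor (C n) (C (S n)))
  (L : GCat G) (lam : forall n, GFunctor (C n) L) : Prop :=
  P L /\
  (forall n, FCompEq (lam (S n)) (k n) (lam n)) /\
  (forall (X : GCat G), P X -> forall (a : forall n, GFunctor (C n) X),
     (forall n, FCompEq (a (S n)) (k n) (a n)) ->
     (exists u : GFunctor L X, forall n, FCompEq u (lam n) (a n)) /\
     (forall u u' : GFunctor L X, (forall n, FCompEq u (lam n) (a n)) ->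
        (forall n, FCompEq u' (lam n) (a n)) -> FEq u u')).

Definition DwyerCompositeClosed : Prop :=
  forall (A B C : GCat G) (k1 : GFunctor A B) (k2 : GFunctor B C),
    P A -> P B -> P C -> IsDwyer k1 -> IsDwyer k2 -> IsDwyer (compGF k2 k1).

Definition DwyerCoproductClosed : Prop :=
  forall (I : Type) (S C : I -> GCat G) (k : forall i, GFunctor (S i) (C i)),
    (forall i, P (S i)) -> (forall i, P (C i)) -> (forall i, IsDwyer (k i)) ->
    forall (QS QC : GCat G) (iS : forall i, GFunctor (S i) QS)
           (iC : forall i, GFunctor (C i) QC),
    @IsCoproduct I S QS iS -> @IsCoproduct I C QC iC ->
    forall kappa : GFunctor QS QC,
      (forall i, FCompEq kappa (iS i) (compGF (iC i) (k i))) ->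
      IsDwyer kappa.

Definition DwyerPushoutClosed : Prop :=
  forall (K L C D : GCat G) (j : GFunctor K L) (f : GFunctor K C)
         (k : GFunctor C D) (h : GFunctor L D),
    P K -> P L -> P C -> IsDwyer j -> IsPushout j f k h -> IsDwyer k.

Definition DwyerSeqColimClosed : Prop :=
  forall (C : nat -> GCat G) (k : forall n, GFunctor (C n) (C (S n))),
    (forall n, P (C n)) -> (forall n, IsDwyer (k n)) ->
    forall (L : GCat G) (lam : forall n, GFunctor (C n) L),
      IsSeqColim k lam -> IsDwyer (lam 0).

Definition DwyerClosureProps : Prop :=
  DwyerCompositeClosed /\ DwyerCoproductClosed /\ DwyerPushoutClosed /\
  DwyerSeqColimClosed.

End Univ.

From Stdlib Require Import ProofIrrelevance ClassicalEpsilon.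
Set Implicit Arguments.
Unset Strict Implicit.

(* A Dwyer structure on a sieve inclusion [k : S -> C] is the same thing as an
   equivariant section [Psi] of a projection [Tied k -> C], built from [k]
   alone, which restricts to the canonical inclusion on [S] and whose counit
   ties lift along [Psi]: the cosieve [T], the retraction [r] and the counit
   are read off from [Psi], and conversely.  For composites, sections are
   composed by composing ties.  For a coproduct, pushout or sequential colimit,
   the sections of the given Dwyer maps, transported into [Tied] of the
   colimit map (together with the canonical inclusion on the source of that
   map), form a cocone, and the universal property glues them into a section
   [Psi].  That [Psi] is a section of the projection and that its
   counits lift are checked on the colimit injections, which are jointly
   epimorphic and jointly surjective on objects.  [Tied k] and the full
   subcategories used are posets when [S] and [C] are, so the argument works
   in [GPos] as well as in [GCat]. *)

Lemma comp_id_l_eq (C : Cat) (f : Mor C) x : cod f = x -> comp (idm x) f = f.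
Proof. intros <-. apply comp_id_l. Qed.

Lemma comp_id_r_eq (C : Cat) (f : Mor C) x : dom f = x -> comp f (idm x) = f.
Proof. intros <-. apply comp_id_r. Qed.

Lemma sig_ext (A : Type) (P : A -> Prop) (x y : sig P) : proj1_sig x = proj1_sig y -> x = y.
Proof. apply eq_sig_hprop. intros; apply proof_irrelevance. Qed.

Definition idF (C : Cat) : Functor C C.
Proof. refine (@Build_Functor C C (fun x => x) (fun m => m) _ _ _ _); reflexivity. Defined.

Definition idG (G : Group) (X : GCat G) : GFunctor X X.
Proof. refine {| gf := idF X |}; reflexivity. Defined.

Lemma aob_inv_l (G : Group) (X : GCat G) (g : G) x : aob X (ginv g) (aob X g x) = x.
Proof. rewrite <- aob_mul, ginv_l, aob_one. reflexivity. Qed.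

Lemma amor_inv_l (G : Group) (X : GCat G) (g : G) m : amor X (ginv g) (amor X g m) = m.
Proof. rewrite <- amor_mul, ginv_l, amor_one. reflexivity. Qed.

(** * The category of tied objects *)

(* An object of [Tied k] is an object [b] of [C], possibly tied to [S] by a
   morphism [m : k s -> b], and marked only if [m] is an identity.  In the
   section attached to a Dwyer structure, the tied objects are those of the
   cosieve [T], their ties are the counits [i r c -> c], and the marked objects
   are those of [S]. *)
Section TiedCategory.
Variables (G : Group) (S C : GCat G) (k : GFunctor S C).

Definition TieOk (b : Ob C) (t : option (Ob S * Mor C)) (z : bool) : Prop :=
  match t with
  | None => z = false
  | Some (s, m) => dom m = fob k s /\ cod m = b /\ (z = true -> m = idm (fob k s))
  end.

Record TiedOb := {
  tbase : Ob C;
  ttie : option (Ob S * Mor C);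
  tmark : bool;
  tied_ok : TieOk tbase ttie tmark }.

(* An untied object maps to anything, a tied one only to tied objects, and
   then by a commuting square [m' o k g = mu o m]. *)
Definition TieSquare (t t' : option (Ob S * Mor C)) (mu : Mor C) (go : option (Mor S)) : Prop :=
  match t, t', go with
  | None, _, None => True
  | Some (s, m), Some (s', m'), Some g =>
      dom g = s /\ cod g = s' /\ comp m' (fmor k g) = comp mu m
  | _, _, _ => False
  end.

Definition TieMorOk (x y : TiedOb) (mu : Mor C) (go : option (Mor S)) : Prop :=
  dom mu = tbase x /\ cod mu = tbase y /\ (tmark y = true -> tmark x = true) /\
  TieSquare (ttie x) (ttie y) mu go.

Record TiedMor := {
  tsrc : TiedOb;
  ttgt : TiedOb;
  tmor : Mor C;
  ttiemor : option (Mor S);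
  tmor_ok : TieMorOk tsrc ttgt tmor ttiemor }.

Lemma TiedOb_ext (x y : TiedOb) :
  tbase x = tbase y -> ttie x = ttie y -> tmark x = tmark y -> x = y.
Proof. destruct x, y; simpl; intros; subst; f_equal; apply proof_irrelevance. Qed.

Lemma TiedMor_ext (f g : TiedMor) : tsrc f = tsrc g -> ttgt f = ttgt g ->
  tmor f = tmor g -> ttiemor f = ttiemor g -> f = g.
Proof. destruct f, g; simpl; intros; subst; f_equal; apply proof_irrelevance. Qed.

Lemma untied_unmarked (x : TiedOb) : ttie x = None -> tmark x = false.
Proof. destruct x as [b t z H]; simpl; intros ->; exact H. Qed.

Lemma tied_spec (x : TiedOb) s m : ttie x = Some (s, m) ->
  dom m = fob k s /\ cod m = tbase x /\ (tmark x = true -> m = idm (fob k s)).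
Proof. destruct x as [b t z H]; simpl; intros ->; exact H. Qed.

Definition id_tiemor (x : TiedOb) : option (Mor S) :=
  option_map (fun p => idm (fst p)) (ttie x).

Lemma tied_id_ok (x : TiedOb) : TieMorOk x x (idm (tbase x)) (id_tiemor x).
Proof.
  unfold TieMorOk, id_tiemor. rewrite dom_idm, cod_idm. do 3 (split; auto).
  destruct (ttie x) as [[s m]|] eqn:E; simpl; auto.
  destruct (tied_spec E) as (H1 & H2 & _).
  rewrite dom_idm, cod_idm, f_id. do 2 (split; auto).
  rewrite <- H1, comp_id_r, <- H2, comp_id_l. reflexivity.
Qed.

Definition tied_id (x : TiedOb) : TiedMor := Build_TiedMor (tied_id_ok x).

Definition option_comp (g f : option (Mor S)) : option (Mor S) :=
  match g, f with Some a, Some b => Some (comp a b) | _, _ => None end.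

Lemma tied_comp_ok (f g : TiedMor) : ttgt f = tsrc g ->
  TieMorOk (tsrc f) (ttgt g) (comp (tmor g) (tmor f)) (option_comp (ttiemor g) (ttiemor f)).
Proof.
  intros E.
  destruct f as [x y mu go Hf], g as [y' w nu ho Hg]; simpl in *. subst y'.
  destruct Hf as (Hf1 & Hf2 & Hf3 & Hf4), Hg as (Hg1 & Hg2 & Hg3 & Hg4).
  assert (Hc : cod mu = dom nu) by congruence.
  unfold TieMorOk. rewrite dom_comp, cod_comp by exact Hc. do 3 (split; auto).
  destruct (ttie x) as [[s m]|] eqn:Ex, (ttie y) as [[s' m']|] eqn:Ey,
           (ttie w) as [[s'' m'']|] eqn:Ew, go as [a|], ho as [b|]; simpl in *;
    try contradiction; auto.
  destruct Hf4 as (Ha1 & Ha2 & Ha3), Hg4 as (Hb1 & Hb2 & Hb3).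
  destruct (tied_spec Ex) as (Hm1 & Hm2 & _).
  destruct (tied_spec Ey) as (Hm1' & Hm2' & _).
  destruct (tied_spec Ew) as (Hm1'' & Hm2'' & _).
  assert (Hab : cod a = dom b) by congruence.
  rewrite dom_comp, cod_comp by exact Hab. do 2 (split; auto).
  rewrite f_comp by exact Hab.
  rewrite comp_assoc; [| rewrite f_cod, f_dom; congruence | rewrite f_cod; congruence].
  rewrite Hb3, <- comp_assoc by (rewrite ?f_cod; congruence).
  rewrite Ha3. apply comp_assoc; congruence.
Qed.

(* The composite of non-composable morphisms is a junk value. *)
Definition tied_comp (g f : TiedMor) : TiedMor :=
  match excluded_middle_informative (ttgt f = tsrc g) with
  | left E => Build_TiedMor (tied_comp_ok E)
  | right _ => f
  end.

Lemma tied_comp_spec (g f : TiedMor) : ttgt f = tsrc g ->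
  tsrc (tied_comp g f) = tsrc f /\ ttgt (tied_comp g f) = ttgt g /\
  tmor (tied_comp g f) = comp (tmor g) (tmor f) /\
  ttiemor (tied_comp g f) = option_comp (ttiemor g) (ttiemor f).
Proof.
  intro E. unfold tied_comp. destruct (excluded_middle_informative _); [|contradiction].
  simpl; auto.
Qed.

Lemma tied_comp_id_l (f : TiedMor) : tied_comp (tied_id (ttgt f)) f = f.
Proof.
  destruct (tied_comp_spec (f := f) (g := tied_id (ttgt f)) eq_refl) as (A1 & A2 & A3 & A4).
  pose proof (tmor_ok f) as (_ & H2 & _ & H).
  apply TiedMor_ext; auto.
  - rewrite A3. apply comp_id_l_eq, H2.
  - rewrite A4; simpl; unfold id_tiemor.
    destruct (ttie (tsrc f)) as [[s m]|], (ttie (ttgt f)) as [[s' m']|], (ttiemor f) as [a|];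
      simpl in *; try contradiction; auto.
    f_equal. apply comp_id_l_eq, H.
Qed.

Lemma tied_comp_id_r (f : TiedMor) : tied_comp f (tied_id (tsrc f)) = f.
Proof.
  destruct (tied_comp_spec (f := tied_id (tsrc f)) (g := f) eq_refl) as (A1 & A2 & A3 & A4).
  pose proof (tmor_ok f) as (H1 & _ & _ & H).
  apply TiedMor_ext; auto.
  - rewrite A3. apply comp_id_r_eq, H1.
  - rewrite A4; simpl; unfold id_tiemor.
    destruct (ttie (tsrc f)) as [[s m]|], (ttie (ttgt f)) as [[s' m']|], (ttiemor f) as [a|];
      simpl in *; try contradiction; auto.
    f_equal. apply comp_id_r_eq, H.
Qed.

Lemma tied_comp_assoc (f g h : TiedMor) : ttgt f = tsrc g -> ttgt g = tsrc h ->
  tied_comp h (tied_comp g f) = tied_comp (tied_comp h g) f.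
Proof.
  intros E1 E2.
  destruct (tied_comp_spec E1) as (A1 & A2 & A3 & A4).
  destruct (tied_comp_spec E2) as (B1 & B2 & B3 & B4).
  assert (E3 : ttgt (tied_comp g f) = tsrc h) by congruence.
  assert (E4 : ttgt f = tsrc (tied_comp h g)) by congruence.
  destruct (tied_comp_spec E3) as (C1 & C2 & C3 & C4).
  destruct (tied_comp_spec E4) as (D1 & D2 & D3 & D4).
  pose proof (tmor_ok f) as (F1 & F2 & _ & F4).
  pose proof (tmor_ok g) as (G1 & G2 & _ & G4).
  pose proof (tmor_ok h) as (H1 & H2 & _ & H4).
  apply TiedMor_ext; try congruence.
  - rewrite C3, D3, A3, B3. apply comp_assoc; congruence.
  - rewrite C4, D4, A4, B4. rewrite E1 in F4. rewrite E2 in G4.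
    destruct (ttie (tsrc f)) as [[s m]|], (ttie (tsrc g)) as [[s' m']|],
      (ttie (tsrc h)) as [[s'' m'']|], (ttie (ttgt h)) as [[s3 m3]|],
      (ttiemor f) as [a|], (ttiemor g) as [b|], (ttiemor h) as [c|];
      simpl in *; try contradiction; auto.
    f_equal. apply comp_assoc; intuition congruence.
Qed.

Definition TiedCat : Cat.
Proof.
  refine {| Ob := TiedOb; Mor := TiedMor; dom := tsrc; cod := ttgt;
            idm := tied_id; comp := tied_comp |}.
  - reflexivity.
  - reflexivity.
  - intros f g E. apply (tied_comp_spec E).
  - intros f g E. apply (tied_comp_spec E).
  - apply tied_comp_id_l.
  - apply tied_comp_id_r.
  - apply tied_comp_assoc.
Defined.

Definition act_tie (g : G) (t : option (Ob S * Mor C)) : option (Ob S * Mor C) :=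
  option_map (fun p => (aob S g (fst p), amor C g (snd p))) t.

Lemma act_tiedob_ok (g : G) (x : TiedOb) :
  TieOk (aob C g (tbase x)) (act_tie g (ttie x)) (tmark x).
Proof.
  unfold TieOk, act_tie. destruct (ttie x) as [[s m]|] eqn:E; simpl.
  - destruct (tied_spec E) as (H1 & H2 & H3).
    rewrite amor_dom, amor_cod, H1, H2, <- gf_ob. do 2 (split; auto).
    intro Hz. rewrite H3 by exact Hz. rewrite amor_id, <- gf_ob. reflexivity.
  - apply untied_unmarked; auto.
Qed.

Definition act_tiedob (g : G) (x : TiedOb) : TiedOb := Build_TiedOb (act_tiedob_ok g x).

Lemma act_tiedmor_ok (g : G) (f : TiedMor) :
  TieMorOk (act_tiedob g (tsrc f)) (act_tiedob g (ttgt f)) (amor C g (tmor f))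
           (option_map (amor S g) (ttiemor f)).
Proof.
  pose proof (tmor_ok f) as (F1 & F2 & F3 & F4).
  unfold TieMorOk; simpl. rewrite amor_dom, amor_cod, F1, F2. do 3 (split; auto).
  unfold act_tie.
  destruct (ttie (tsrc f)) as [[s m]|] eqn:E1, (ttie (ttgt f)) as [[s' m']|] eqn:E2,
    (ttiemor f) as [a|]; simpl in *; try contradiction; auto.
  destruct F4 as (A1 & A2 & A3).
  destruct (tied_spec E1) as (H1 & H2 & _), (tied_spec E2) as (H1' & H2' & _).
  rewrite amor_dom, amor_cod, A1, A2. do 2 (split; auto).
  rewrite gf_mor, <- amor_comp by (rewrite f_cod, A2; congruence).
  rewrite <- amor_comp by congruence.
  rewrite A3; reflexivity.
Qed.

Definition act_tiedmor (g : G) (f : TiedMor) : TiedMor := Build_TiedMor (act_tiedmor_ok g f).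

Lemma act_tiedmor_comp (g : G) (f h : TiedMor) : ttgt f = tsrc h ->
  act_tiedmor g (tied_comp h f) = tied_comp (act_tiedmor g h) (act_tiedmor g f).
Proof.
  intro E.
  destruct (tied_comp_spec E) as (A1 & A2 & A3 & A4).
  assert (E' : ttgt (act_tiedmor g f) = tsrc (act_tiedmor g h)) by (simpl; congruence).
  destruct (tied_comp_spec E') as (B1 & B2 & B3 & B4).
  pose proof (tmor_ok f) as (F1 & F2 & _ & F4).
  pose proof (tmor_ok h) as (H1 & H2 & _ & H4).
  apply TiedMor_ext.
  - rewrite B1. simpl. rewrite A1. reflexivity.
  - rewrite B2. simpl. rewrite A2. reflexivity.
  - rewrite B3. simpl. rewrite A3. apply amor_comp. congruence.
  - rewrite B4. simpl. rewrite A4. rewrite E in F4.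
    destruct (ttie (tsrc f)) as [[s m]|], (ttie (tsrc h)) as [[s' m']|],
      (ttie (ttgt h)) as [[s'' m'']|], (ttiemor f) as [a|], (ttiemor h) as [b|];
      simpl in *; try contradiction; auto.
    f_equal. apply amor_comp. intuition congruence.
Qed.

Lemma act_tiedob_one (x : TiedOb) : act_tiedob (@gone G) x = x.
Proof.
  apply TiedOb_ext; simpl; auto.
  - apply aob_one.
  - unfold act_tie. destruct (ttie x) as [[s m]|]; simpl; auto.
    rewrite aob_one, amor_one; auto.
Qed.

Lemma act_tiedob_mul (g h : G) (x : TiedOb) :
  act_tiedob (@gmul G g h) x = act_tiedob g (act_tiedob h x).
Proof.
  apply TiedOb_ext; simpl; auto.
  - apply aob_mul.
  - unfold act_tie. destruct (ttie x) as [[s m]|]; simpl; auto.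
    rewrite aob_mul, amor_mul; auto.
Qed.

Definition Tied : GCat G.
Proof.
  refine {| gc := TiedCat; aob := act_tiedob; amor := act_tiedmor |}.
  - reflexivity.
  - reflexivity.
  - intros g x. apply TiedMor_ext; simpl; auto.
    + apply amor_id.
    + unfold id_tiemor; simpl; unfold act_tie.
      destruct (ttie x) as [[s m]|]; simpl; auto. rewrite amor_id; auto.
  - apply act_tiedmor_comp.
  - apply act_tiedob_one.
  - intro f. apply TiedMor_ext; simpl; rewrite ?act_tiedob_one; auto.
    + apply amor_one.
    + destruct (ttiemor f); simpl; auto. rewrite amor_one; auto.
  - apply act_tiedob_mul.
  - intros g h f. apply TiedMor_ext; simpl; rewrite ?act_tiedob_mul; auto.
    + apply amor_mul.
    + destruct (ttiemor f); simpl; auto. rewrite amor_mul; auto.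
Defined.

Definition tied_baseF : Functor Tied C.
Proof.
  refine (@Build_Functor Tied C tbase tmor _ _ _ _).
  - intro m. apply (tmor_ok m).
  - intro m. apply (tmor_ok m).
  - intro x. reflexivity.
  - intros f g E. apply (tied_comp_spec E).
Defined.

Definition tied_base : GFunctor Tied C.
Proof. refine {| gf := tied_baseF |}; reflexivity. Defined.

Lemma tie_ob_ok (s : Ob S) : TieOk (fob k s) (Some (s, idm (fob k s))) true.
Proof. simpl. rewrite dom_idm, cod_idm. auto. Qed.

Definition tie_ob (s : Ob S) : TiedOb := Build_TiedOb (tie_ob_ok s).

Lemma tie_mor_ok (a : Mor S) : TieMorOk (tie_ob (dom a)) (tie_ob (cod a)) (fmor k a) (Some a).
Proof.
  unfold TieMorOk; simpl. rewrite f_dom, f_cod. do 5 (split; auto).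
  rewrite comp_id_l_eq, comp_id_r_eq; auto. apply f_dom. apply f_cod.
Qed.

Definition tie_mor (a : Mor S) : TiedMor := Build_TiedMor (tie_mor_ok a).

Definition tie_inclF : Functor S Tied.
Proof.
  refine (@Build_Functor S Tied tie_ob tie_mor _ _ _ _).
  - reflexivity.
  - reflexivity.
  - intro x. apply TiedMor_ext; simpl.
    + apply TiedOb_ext; simpl; rewrite ?dom_idm; auto.
    + apply TiedOb_ext; simpl; rewrite ?cod_idm; auto.
    + apply f_id.
    + reflexivity.
  - intros f g E. simpl.
    assert (E' : ttgt (tie_mor f) = tsrc (tie_mor g)) by (simpl; rewrite E; auto).
    destruct (tied_comp_spec E') as (A1 & A2 & A3 & A4).
    apply TiedMor_ext.
    + rewrite A1. simpl. rewrite dom_comp by exact E. reflexivity.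
    + rewrite A2. simpl. rewrite cod_comp by exact E. reflexivity.
    + rewrite A3. apply f_comp. exact E.
    + rewrite A4. reflexivity.
Defined.

Lemma act_tie_ob (g : G) s : act_tiedob g (tie_ob s) = tie_ob (aob S g s).
Proof. apply TiedOb_ext; simpl; rewrite ?amor_id, ?gf_ob; reflexivity. Qed.

Definition tie_incl : GFunctor S Tied.
Proof.
  refine {| gf := tie_inclF |}.
  - intros g x. symmetry. apply act_tie_ob.
  - intros g m. apply TiedMor_ext; simpl.
    + rewrite amor_dom. symmetry. apply act_tie_ob.
    + rewrite amor_cod. symmetry. apply act_tie_ob.
    + apply gf_mor.
    + reflexivity.
Defined.

Lemma Tied_poset : IsPoset S -> IsPoset C -> IsPoset Tied.
Proof.
  intros [PS1 PS2] [PC1 PC2]. split.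
  - intros f g Hd Hc. simpl in *.
    pose proof (tmor_ok f) as (F1 & F2 & _ & F4).
    pose proof (tmor_ok g) as (G1 & G2 & _ & G4).
    apply TiedMor_ext; auto.
    + apply PC1; congruence.
    + rewrite Hd, Hc in F4.
      destruct (ttie (tsrc g)) as [[s m]|], (ttie (ttgt g)) as [[s' m']|],
        (ttiemor f) as [a|], (ttiemor g) as [b|]; simpl in *; try contradiction; auto.
      f_equal. apply PS1; intuition congruence.
  - intros f g Hd Hc. simpl in *.
    pose proof (tmor_ok f) as (F1 & F2 & F3 & F4).
    pose proof (tmor_ok g) as (G1 & G2 & G3 & G4).
    rewrite Hd in F1, F3, F4. rewrite Hc in F2, F3, F4.
    assert (Eb : tbase (ttgt g) = tbase (tsrc g)).
    { rewrite <- F1, <- F2. apply (PC2 (tmor f) (tmor g)); congruence. }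
    apply TiedOb_ext; rewrite ?Hd, ?Hc; auto.
    + destruct (ttie (tsrc g)) as [[s m]|] eqn:E1, (ttie (ttgt g)) as [[s' m']|] eqn:E2,
        (ttiemor f) as [a|], (ttiemor g) as [b|]; simpl in *; try contradiction; auto.
      destruct (tied_spec E1) as (H1 & H2 & _), (tied_spec E2) as (H1' & H2' & _).
      assert (s' = s).
      { destruct F4 as (A1 & A2 & _), G4 as (B1 & B2 & _).
        rewrite <- A1, <- A2. apply (PS2 a b); congruence. }
      subst s'. f_equal. f_equal. apply PC1; congruence.
    + destruct (tmark (ttgt g)), (tmark (tsrc g)); auto;
        first [discriminate (G3 eq_refl) | discriminate (F3 eq_refl)].
Qed.

End TiedCategory.

Arguments tie_ob {G S C k} s.
Arguments tie_mor {G S C k} a.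

(* Goals often mention the bare category [TiedCat k]; this restores
   [gc (Tied k)] so that lemmas about functors into [Tied k] match. *)
Ltac fold_tied := repeat change (TiedCat ?k) with (gc (Tied k)) in *.

(** * Full G-subcategories *)

Section FullSubcategory.
Variables (G : Group) (D : GCat G) (Q : Ob D -> Prop).
Hypothesis HQ : forall g d, Q d -> Q (aob D g d).

Definition FullOb := { d : Ob D | Q d }.
Definition FullMor := { m : Mor D | Q (dom m) /\ Q (cod m) }.

Definition full_dom (m : FullMor) : FullOb := exist _ (dom (proj1_sig m)) (proj1 (proj2_sig m)).
Definition full_cod (m : FullMor) : FullOb := exist _ (cod (proj1_sig m)) (proj2 (proj2_sig m)).

Lemma full_id_ok (x : FullOb) : Q (dom (idm (proj1_sig x))) /\ Q (cod (idm (proj1_sig x))).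
Proof. rewrite dom_idm, cod_idm. destruct x; simpl; auto. Qed.

Definition full_id (x : FullOb) : FullMor := exist _ _ (full_id_ok x).

Lemma full_comp_ok (g f : FullMor) : cod (proj1_sig f) = dom (proj1_sig g) ->
  Q (dom (comp (proj1_sig g) (proj1_sig f))) /\ Q (cod (comp (proj1_sig g) (proj1_sig f))).
Proof.
  intro E. rewrite dom_comp, cod_comp by exact E.
  destruct f as [f [F1 F2]], g as [g [G1 G2]]; simpl; auto.
Qed.

Definition full_comp (g f : FullMor) : FullMor :=
  match excluded_middle_informative (cod (proj1_sig f) = dom (proj1_sig g)) with
  | left E => exist _ _ (full_comp_ok E)
  | right _ => f
  end.

Lemma full_comp_val (g f : FullMor) : cod (proj1_sig f) = dom (proj1_sig g) ->
  proj1_sig (full_comp g f) = comp (proj1_sig g) (proj1_sig f).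
Proof.
  intro E. unfold full_comp.
  destruct (excluded_middle_informative _); [reflexivity | contradiction].
Qed.

Lemma full_cod_dom (f g : FullMor) :
  full_cod f = full_dom g -> cod (proj1_sig f) = dom (proj1_sig g).
Proof. intro E. exact (f_equal (@proj1_sig _ _) E). Qed.

Definition FullCat : Cat.
Proof.
  refine {| Ob := FullOb; Mor := FullMor; dom := full_dom; cod := full_cod;
            idm := full_id; comp := full_comp |}.
  - intro x. apply sig_ext, dom_idm.
  - intro x. apply sig_ext, cod_idm.
  - intros f g E. apply full_cod_dom in E. apply sig_ext; simpl.
    rewrite full_comp_val by exact E. apply dom_comp, E.
  - intros f g E. apply full_cod_dom in E. apply sig_ext; simpl.
    rewrite full_comp_val by exact E. apply cod_comp, E.
  - intro f. apply sig_ext. rewrite full_comp_val by (symmetry; apply dom_idm).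
    apply comp_id_l.
  - intro f. apply sig_ext. rewrite full_comp_val by apply cod_idm.
    apply comp_id_r.
  - intros f g h E1 E2. apply full_cod_dom in E1, E2. apply sig_ext.
    rewrite !full_comp_val; auto.
    + apply comp_assoc; auto.
    + rewrite full_comp_val, dom_comp; auto.
    + rewrite full_comp_val, cod_comp; auto.
Defined.

Lemma full_act_ok (g : G) (m : FullMor) :
  Q (dom (amor D g (proj1_sig m))) /\ Q (cod (amor D g (proj1_sig m))).
Proof. rewrite amor_dom, amor_cod. destruct m as [m [M1 M2]]; simpl; auto. Qed.

Definition FullSub : GCat G.
Proof.
  refine {| gc := FullCat;
            aob := fun g (x : FullOb) => exist _ (aob D g (proj1_sig x)) (HQ g (proj2_sig x));
            amor := fun g (m : FullMor) => exist _ (amor D g (proj1_sig m)) (full_act_ok g m) |}.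
  - intros; apply sig_ext, amor_dom.
  - intros; apply sig_ext, amor_cod.
  - intros; apply sig_ext, amor_id.
  - intros g f h E. apply full_cod_dom in E. apply sig_ext; simpl.
    rewrite !full_comp_val; auto.
    + apply amor_comp, E.
    + simpl. rewrite amor_cod, amor_dom, E. reflexivity.
  - intros; apply sig_ext, aob_one.
  - intros; apply sig_ext, amor_one.
  - intros; apply sig_ext, aob_mul.
  - intros; apply sig_ext, amor_mul.
Defined.

Definition full_inclF : Functor FullSub D.
Proof.
  refine (@Build_Functor FullSub D (@proj1_sig _ _) (@proj1_sig _ _) _ _ _ _);
    try reflexivity.
  intros f g E. apply full_comp_val, full_cod_dom, E.
Defined.

Definition full_incl : GFunctor FullSub D.
Proof. refine {| gf := full_inclF |}; reflexivity. Defined.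

Lemma full_incl_inclusion : IsInclusion full_incl.
Proof. split; intros x y E; apply sig_ext, E. Qed.

Section Corestriction.
Variables (A : GCat G) (F : GFunctor A D) (HF : forall a, Q (fob F a)).

Lemma full_corestr_ok (m : Mor A) : Q (dom (fmor F m)) /\ Q (cod (fmor F m)).
Proof. rewrite f_dom, f_cod. auto. Qed.

Definition full_corestrF : Functor A FullSub.
Proof.
  refine (@Build_Functor A FullSub (fun a => exist Q (fob F a) (HF a))
             (fun m => exist _ (fmor F m) (full_corestr_ok m)) _ _ _ _).
  - intro m. apply sig_ext, f_dom.
  - intro m. apply sig_ext, f_cod.
  - intro x. apply sig_ext, f_id.
  - intros f g E. apply sig_ext. simpl. rewrite full_comp_val.
    + apply f_comp, E.
    + simpl. rewrite f_cod, f_dom, E. reflexivity.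
Defined.

Definition full_corestr : GFunctor A FullSub.
Proof.
  refine {| gf := full_corestrF |}.
  - intros g x. apply sig_ext, gf_ob.
  - intros g m. apply sig_ext, gf_mor.
Defined.

End Corestriction.

Lemma FullSub_poset : IsPoset D -> IsPoset FullSub.
Proof.
  intros [P1 P2]. split.
  - intros f g E1 E2. apply sig_ext, P1.
    + exact (f_equal (@proj1_sig _ _) E1).
    + exact (f_equal (@proj1_sig _ _) E2).
  - intros f g E1 E2. apply sig_ext, (P2 _ (proj1_sig g)).
    + exact (f_equal (@proj1_sig _ _) E1).
    + exact (f_equal (@proj1_sig _ _) E2).
Qed.

End FullSubcategory.

(** * Dwyer sections *)

Definition option_get (A : Type) (o : option A) : o <> None -> A :=
  match o as o0 return o0 <> None -> A with
  | Some a => fun _ => a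
  | None => fun H => False_rect _ (H eq_refl)
  end.

Lemma option_get_eq (A : Type) (o : option A) (H : o <> None) a : o = Some a -> option_get H = a.
Proof. intros ->. reflexivity. Qed.

Section DwyerSections.
Variables (G : Group) (S C : GCat G) (k : GFunctor S C).

Definition CounitLifts (B : GCat G) (A : GFunctor B (Tied k)) : Prop :=
  forall b s m, ttie (fob A b : TiedOb k) = Some (s, m) ->
    exists mt : Mor B, cod mt = b /\ tmor (fmor A mt : TiedMor k) = m /\
                       ttiemor (fmor A mt : TiedMor k) = Some (idm s).

Definition DwyerSection (Psi : GFunctor C (Tied k)) : Prop :=
  (forall c, tbase (fob Psi c : TiedOb k) = c) /\
  (forall mu, tmor (fmor Psi mu : TiedMor k) = mu) /\
  (forall s, fob Psi (fob k s) = tie_ob s) /\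
  (forall a, fmor Psi (fmor k a) = tie_mor a) /\
  CounitLifts Psi.

Lemma tied_ex (x : TiedOb k) : ttie x <> None -> exists s m, ttie x = Some (s, m).
Proof. destruct (ttie x) as [[s m]|]; [eauto | congruence]. Qed.

Lemma tiemor_of_tied (f : TiedMor k) :
  ttie (tsrc f) <> None -> ttie (ttgt f) <> None /\ ttiemor f <> None.
Proof.
  intro H. pose proof (tmor_ok f) as (_ & _ & _ & F).
  destruct (ttie (tsrc f)) as [[s m]|], (ttie (ttgt f)) as [[s' m']|], (ttiemor f);
    simpl in *; try contradiction; split; discriminate.
Qed.

Lemma tiemor_square (f : TiedMor k) s m s' m' a :
  ttie (tsrc f) = Some (s, m) -> ttie (ttgt f) = Some (s', m') -> ttiemor f = Some a ->
  dom a = s /\ cod a = s' /\ comp m' (fmor k a) = comp (tmor f) m.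
Proof.
  intros E1 E2 E3. pose proof (tmor_ok f) as (_ & _ & _ & F). rewrite E1, E2, E3 in F. exact F.
Qed.

Variable Psi : GFunctor C (Tied k).
Hypotheses (Psi_base_ob : forall c, tbase (fob Psi c : TiedOb k) = c)
  (Psi_base_mor : forall mu, tmor (fmor Psi mu : TiedMor k) = mu)
  (Psi_tie_ob : forall s, fob Psi (fob k s) = tie_ob s)
  (Psi_tie_mor : forall a, fmor Psi (fmor k a) = tie_mor a)
  (Psi_counit : CounitLifts Psi).

Definition tied_at (c : Ob C) : Prop := ttie (fob Psi c : TiedOb k) <> None.

Lemma tied_at_act g c : tied_at c -> tied_at (aob C g c).
Proof.
  unfold tied_at. rewrite gf_ob. simpl. unfold act_tie. destruct (ttie _); simpl; congruence.
Qed.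

Lemma tied_at_k s : tied_at (fob k s).
Proof. unfold tied_at. rewrite Psi_tie_ob. simpl. discriminate. Qed.

Lemma Psi_dom (mu : Mor C) : tsrc (fmor Psi mu : TiedMor k) = fob Psi (dom mu).
Proof. apply (f_dom Psi). Qed.

Lemma Psi_cod (mu : Mor C) : ttgt (fmor Psi mu : TiedMor k) = fob Psi (cod mu).
Proof. apply (f_cod Psi). Qed.

Definition sec_T : GCat G := FullSub tied_at_act.
Definition sec_j : GFunctor sec_T C := full_incl tied_at_act.
Definition sec_i : GFunctor S sec_T := full_corestr tied_at_act (F := k) tied_at_k.

Definition sec_r_ob (t : Ob sec_T) : Ob S := fst (option_get (proj2_sig t)).

Lemma sec_r_mor_ok (mu : Mor sec_T) : ttiemor (fmor Psi (proj1_sig mu) : TiedMor k) <> None.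
Proof.
  destruct mu as [mu [Q1 Q2]]. apply tiemor_of_tied. simpl. rewrite Psi_dom. exact Q1.
Qed.

Definition sec_r_mor (mu : Mor sec_T) : Mor S := option_get (@sec_r_mor_ok mu).

Definition sec_eps_arrow (t : Ob sec_T) : Mor C := snd (option_get (proj2_sig t)).

Lemma sec_r_ob_eq (t : Ob sec_T) s m :
  ttie (fob Psi (proj1_sig t) : TiedOb k) = Some (s, m) -> sec_r_ob t = s.
Proof. intro E. unfold sec_r_ob. rewrite (option_get_eq _ E). reflexivity. Qed.

Lemma sec_eps_arrow_eq (t : Ob sec_T) s m :
  ttie (fob Psi (proj1_sig t) : TiedOb k) = Some (s, m) -> sec_eps_arrow t = m.
Proof. intro E. unfold sec_eps_arrow. rewrite (option_get_eq _ E). reflexivity. Qed.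

Lemma sec_r_mor_eq (mu : Mor sec_T) a :
  ttiemor (fmor Psi (proj1_sig mu) : TiedMor k) = Some a -> sec_r_mor mu = a.
Proof. apply option_get_eq. Qed.

Lemma sec_tie_spec (t : Ob sec_T) :
  ttie (fob Psi (proj1_sig t) : TiedOb k) = Some (sec_r_ob t, sec_eps_arrow t).
Proof.
  destruct (tied_ex (proj2_sig t)) as (s & m & E).
  rewrite (sec_r_ob_eq E), (sec_eps_arrow_eq E). exact E.
Qed.

Lemma sec_eps_arrow_dom (t : Ob sec_T) : dom (sec_eps_arrow t) = fob k (sec_r_ob t).
Proof. apply (tied_spec (sec_tie_spec t)). Qed.

Lemma sec_eps_arrow_cod (t : Ob sec_T) : cod (sec_eps_arrow t) = proj1_sig t.
Proof. destruct (tied_spec (sec_tie_spec t)) as (_ & A & _). rewrite A. apply Psi_base_ob. Qed.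

Lemma sec_r_mor_spec (mu : Mor sec_T) :
  dom (sec_r_mor mu) = sec_r_ob (dom mu) /\ cod (sec_r_mor mu) = sec_r_ob (cod mu) /\
  comp (sec_eps_arrow (cod mu)) (fmor k (sec_r_mor mu)) =
  comp (proj1_sig mu) (sec_eps_arrow (dom mu)).
Proof.
  destruct (ttiemor (fmor Psi (proj1_sig mu) : TiedMor k)) as [a|] eqn:E3;
    [| exfalso; exact (sec_r_mor_ok E3)].
  pose proof (sec_tie_spec (dom mu)) as E1. pose proof (sec_tie_spec (cod mu)) as E2.
  simpl in E1, E2. fold_tied.
  rewrite <- Psi_dom in E1. rewrite <- Psi_cod in E2.
  rewrite (sec_r_mor_eq E3), <- (Psi_base_mor (proj1_sig mu)).
  exact (tiemor_square E1 E2 E3).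
Qed.

Definition sec_rF : Functor sec_T S.
Proof.
  refine (@Build_Functor sec_T S sec_r_ob sec_r_mor _ _ _ _).
  - intro mu. apply (sec_r_mor_spec mu).
  - intro mu. apply (sec_r_mor_spec mu).
  - intro x. apply sec_r_mor_eq. simpl. rewrite (f_id Psi). simpl. unfold id_tiemor.
    fold_tied. rewrite sec_tie_spec. reflexivity.
  - intros f g E. apply sec_r_mor_eq.
    assert (E' : cod (proj1_sig f) = dom (proj1_sig g)) by exact (full_cod_dom E).
    simpl. rewrite full_comp_val, (f_comp Psi) by exact E'.
    assert (E2 : ttgt (fmor Psi (proj1_sig f) : TiedMor k) =
                 tsrc (fmor Psi (proj1_sig g) : TiedMor k))
      by (rewrite Psi_dom, Psi_cod, E'; reflexivity).
    destruct (tied_comp_spec E2) as (_ & _ & _ & A4). simpl.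
    change (@comp (TiedCat k)) with (@tied_comp _ _ _ k). fold_tied. rewrite A4.
    destruct (ttiemor (fmor Psi (proj1_sig f) : TiedMor k)) as [a|] eqn:Ea;
      [| exfalso; exact (sec_r_mor_ok Ea)].
    destruct (ttiemor (fmor Psi (proj1_sig g) : TiedMor k)) as [b|] eqn:Eb;
      [| exfalso; exact (sec_r_mor_ok Eb)].
    rewrite (sec_r_mor_eq Ea), (sec_r_mor_eq Eb). reflexivity.
Defined.

Definition sec_r : GFunctor sec_T S.
Proof.
  refine {| gf := sec_rF |}.
  - intros g t. simpl. apply (@sec_r_ob_eq (aob sec_T g t) _ (amor C g (sec_eps_arrow t))).
    simpl. rewrite (gf_ob Psi). simpl. unfold act_tie. fold_tied.
    rewrite sec_tie_spec. reflexivity.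
  - intros g mu. simpl. apply sec_r_mor_eq. simpl. rewrite (gf_mor Psi). simpl.
    destruct (ttiemor (fmor Psi (proj1_sig mu) : TiedMor k)) as [a|] eqn:Ea;
      [| exfalso; exact (sec_r_mor_ok Ea)].
    fold_tied. rewrite Ea, (sec_r_mor_eq Ea). reflexivity.
Defined.

Lemma sec_eps_ok (t : Ob sec_T) :
  tied_at (dom (sec_eps_arrow t)) /\ tied_at (cod (sec_eps_arrow t)).
Proof.
  rewrite sec_eps_arrow_dom, sec_eps_arrow_cod. split.
  - apply tied_at_k.
  - exact (proj2_sig t).
Qed.

Definition sec_eps (t : Ob sec_T) : Mor sec_T := exist _ _ (sec_eps_ok t).

Lemma k_inclusion : IsInclusion k.
Proof.
  split.
  - intros x y E. apply (f_equal (fob Psi)) in E. rewrite !Psi_tie_ob in E.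
    apply (f_equal (@ttie _ _ _ k)) in E. simpl in E. congruence.
  - intros f g E. apply (f_equal (fmor Psi)) in E. rewrite !Psi_tie_mor in E.
    apply (f_equal (@ttiemor _ _ _ k)) in E. simpl in E. congruence.
Qed.

(* A morphism into a marked object comes from a marked, hence [S]-tied, source. *)
Lemma k_sieve : IsSieveInclusion k.
Proof.
  split; [apply k_inclusion|]. intros s f Ef.
  pose proof (tmor_ok (fmor Psi f : TiedMor k)) as (F1 & F2 & F3 & F4). fold_tied.
  rewrite Psi_dom in F1, F3, F4. rewrite Psi_cod, Ef, Psi_tie_ob in F2, F3, F4.
  simpl in F3, F4. specialize (F3 eq_refl).
  destruct (ttie (fob Psi (dom f) : TiedOb k)) as [[s' m]|] eqn:E1.
  2:{ pose proof (untied_unmarked E1) as U. fold_tied. congruence. }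
  destruct (tied_spec E1) as (A1 & A2 & A3). specialize (A3 F3).
  fold_tied. rewrite E1 in F4.
  destruct (ttiemor (fmor Psi f : TiedMor k)) as [a|]; [|contradiction].
  destruct F4 as (B1 & B2 & B3).
  exists a. rewrite Psi_base_mor, A3 in B3.
  rewrite comp_id_l_eq, comp_id_r_eq in B3; auto.
  - rewrite Psi_base_ob in A2. rewrite <- A2, A3, cod_idm. reflexivity.
  - rewrite f_cod, B2. reflexivity.
Qed.

Lemma sec_j_cosieve : IsCosieveInclusion sec_j.
Proof.
  split; [apply full_incl_inclusion|]. intros t f Ef.
  assert (Q1 : tied_at (dom f)) by (simpl in Ef; rewrite Ef; exact (proj2_sig t)).
  assert (Q2 : tied_at (cod f)).
  { unfold tied_at in *. rewrite <- Psi_cod. rewrite <- Psi_dom in Q1.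
    apply (tiemor_of_tied Q1). }
  exists (exist _ f (conj Q1 Q2)). reflexivity.
Qed.

Lemma sec_i_inclusion : IsInclusion sec_i.
Proof.
  destruct k_inclusion as [I1 I2]. split.
  - intros x y E. apply I1. exact (f_equal (@proj1_sig _ _) E).
  - intros x y E. apply I2. exact (f_equal (@proj1_sig _ _) E).
Qed.

Lemma sec_eps_natural (f : Mor sec_T) :
  comp f (sec_eps (dom f)) = comp (sec_eps (cod f)) (fmor sec_i (fmor sec_r f)).
Proof.
  destruct (sec_r_mor_spec f) as (A1 & A2 & A3).
  assert (Ec1 : cod (proj1_sig (sec_eps (dom f))) = dom (proj1_sig f))
    by apply sec_eps_arrow_cod.
  assert (Ec2 : cod (proj1_sig (fmor sec_i (fmor sec_r f))) =
                dom (proj1_sig (sec_eps (cod f))))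
    by (simpl; rewrite sec_eps_arrow_dom, f_cod, A2; reflexivity).
  apply sig_ext. simpl. rewrite !full_comp_val by assumption. symmetry. exact A3.
Qed.

Lemma sec_r_adjoint : IsRightAdjointIdUnit sec_i sec_r.
Proof.
  split; [|split].
  - intro s. apply (@sec_r_ob_eq (fob sec_i s) _ (idm (fob k s))).
    simpl. fold_tied. rewrite Psi_tie_ob. reflexivity.
  - intro a. apply sec_r_mor_eq. simpl. fold_tied. rewrite Psi_tie_mor. reflexivity.
  - exists sec_eps. split; [|split; [|split; [|split]]].
    + intro t. apply sig_ext, sec_eps_arrow_dom.
    + intro t. apply sig_ext, sec_eps_arrow_cod.
    + apply sec_eps_natural.
    + intro s. apply sig_ext. simpl. apply (@sec_eps_arrow_eq _ s).
      simpl. fold_tied. rewrite Psi_tie_ob. reflexivity.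
    + intro t. apply sec_r_mor_eq. simpl.
      destruct (Psi_counit (sec_tie_spec t)) as (mt & _ & C2 & C3).
      rewrite Psi_base_mor in C2. subst mt. fold_tied. exact C3.
Qed.

Lemma dwyer_of_section_data : IsDwyer k.
Proof.
  split; [apply k_sieve|].
  exists sec_T, sec_i, sec_j, sec_r.
  split; [split; intro; reflexivity|].
  split; [apply sec_j_cosieve|].
  split; [apply sec_i_inclusion | apply sec_r_adjoint].
Qed.

End DwyerSections.

Theorem dwyer_of_section (G : Group) (S C : GCat G) (k : GFunctor S C)
  (Psi : GFunctor C (Tied k)) : DwyerSection Psi -> IsDwyer k.
Proof. intros (H1 & H2 & H3 & H4 & H5). exact (dwyer_of_section_data H1 H2 H3 H4 H5). Qed.

Section Preimage.
Variables (A B : Type) (f : A -> B).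

Definition preimage (b : B) : option A :=
  match excluded_middle_informative (exists a, f a = b) with
  | left H => Some (proj1_sig (constructive_indefinite_description _ H))
  | right _ => None
  end.

Lemma preimage_some b a : preimage b = Some a -> f a = b.
Proof.
  unfold preimage. destruct (excluded_middle_informative _) as [H|H]; [|discriminate].
  intro E. injection E as <-. apply (proj2_sig (constructive_indefinite_description _ H)).
Qed.

Lemma preimage_none b : preimage b = None -> forall a, f a <> b.
Proof.
  unfold preimage. destruct (excluded_middle_informative _) as [H|H]; [discriminate|].
  intros _ a E. apply H. exists a; exact E.
Qed.

Hypothesis f_inj : forall x y, f x = f y -> x = y.

Lemma preimage_of a b : f a = b -> preimage b = Some a.
Proof.
  intro E. destruct (preimage b) as [a'|] eqn:Eb.
  - apply preimage_some in Eb. f_equal. apply f_inj. congruence.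
  - exfalso. exact (preimage_none Eb E).
Qed.

Lemma preimage_conj (ga ga' : A -> A) (gb gb' : B -> B)
  (Hga : forall a, f (ga a) = gb (f a)) (Hga' : forall a, f (ga' a) = gb' (f a))
  (Hgb : forall b, gb' (gb b) = b) b :
  preimage (gb b) = option_map ga (preimage b).
Proof.
  destruct (preimage b) as [a|] eqn:E; simpl.
  - apply preimage_of. apply preimage_some in E. rewrite Hga, E. reflexivity.
  - destruct (preimage (gb b)) as [a'|] eqn:E'; auto. apply preimage_some in E'.
    exfalso. apply (preimage_none E (a := ga' a')). rewrite Hga', E', Hgb. reflexivity.
Qed.

End Preimage.

Section SectionOfDwyer.
Variables (G : Group) (S C T : GCat G) (k : GFunctor S C)
  (i : GFunctor S T) (j : GFunctor T C) (r : GFunctor T S).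
Hypotheses (k_sieve : IsSieveInclusion k) (ji_k : FCompEq j i k) (j_cosieve : IsCosieveInclusion j).
Variable eps : Ob T -> Mor T.
Hypotheses (ri_ob : forall s, fob r (fob i s) = s)
  (ri_mor : forall m, fmor r (fmor i m) = m)
  (eps_dom : forall t, dom (eps t) = fob i (fob r t))
  (eps_cod : forall t, cod (eps t) = t)
  (eps_nat : forall f : Mor T, comp f (eps (dom f)) = comp (eps (cod f)) (fmor i (fmor r f)))
  (eps_i : forall s, eps (fob i s) = idm (fob i s))
  (r_eps : forall t, fmor r (eps t) = idm (fob r t)).

(* The triangle identities characterise the counit, hence it is equivariant. *)
Lemma eps_unique (t : Ob T) (x : Mor T) : dom x = fob i (fob r t) -> cod x = t ->
  fmor r x = idm (fob r t) -> x = eps t.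
Proof.
  intros D1 D2 D3. pose proof (eps_nat x) as N. rewrite D1, eps_i, D2, D3 in N.
  rewrite <- D1 in N at 1. rewrite comp_id_r in N. rewrite N, f_id.
  apply comp_id_r_eq. rewrite eps_dom. reflexivity.
Qed.

Lemma eps_act (g : G) t : eps (aob T g t) = amor T g (eps t).
Proof.
  symmetry. apply eps_unique.
  - rewrite amor_dom, eps_dom, gf_ob, gf_ob. reflexivity.
  - rewrite amor_cod, eps_cod. reflexivity.
  - rewrite gf_mor, r_eps, amor_id, gf_ob. reflexivity.
Qed.

Lemma k_ob_eq s : fob k s = fob j (fob i s).
Proof. symmetry. apply (proj1 ji_k). Qed.

Lemma k_mor_eq a : fmor k a = fmor j (fmor i a).
Proof. symmetry. apply (proj2 ji_k). Qed.

Let j_ob_inj := proj1 (proj1 j_cosieve).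
Let j_mor_inj := proj2 (proj1 j_cosieve).
Let k_ob_inj := proj1 (proj1 k_sieve).

Definition t_of (c : Ob C) : option (Ob T) := preimage (fob j) c.
Definition m_of (mu : Mor C) : option (Mor T) := preimage (fmor j) mu.

Definition marked (c : Ob C) : bool :=
  match preimage (fob k) c with Some _ => true | None => false end.

Lemma marked_true c : marked c = true -> exists s, fob k s = c.
Proof.
  unfold marked. destruct (preimage (fob k) c) eqn:E; [|discriminate].
  intros _. exists o. exact (preimage_some E).
Qed.

Lemma marked_of c s : fob k s = c -> marked c = true.
Proof. intro E. unfold marked. rewrite (preimage_of k_ob_inj E). reflexivity. Qed.

Definition counit_tie (c : Ob C) : option (Ob S * Mor C) :=
  option_map (fun t => (fob r t, fmor j (eps t))) (t_of c).

Lemma counit_tie_ok c : TieOk k c (counit_tie c) (marked c).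
Proof.
  unfold TieOk, counit_tie. destruct (t_of c) as [t|] eqn:Et; simpl.
  - apply preimage_some in Et.
    rewrite f_dom, f_cod, eps_dom, eps_cod, <- k_ob_eq. do 2 (split; auto).
    intro F. destruct (marked_true F) as (s & Es).
    assert (t = fob i s) by (apply j_ob_inj; rewrite Et, <- Es; apply k_ob_eq).
    subst t. rewrite eps_i, f_id, ri_ob, <- k_ob_eq. reflexivity.
  - destruct (marked c) eqn:F; auto. destruct (marked_true F) as (s & Es).
    exfalso. apply (preimage_none Et (a := fob i s)). rewrite <- Es. symmetry. apply k_ob_eq.
Qed.

Definition dsec_ob (c : Ob C) : TiedOb k := Build_TiedOb (counit_tie_ok c).

Lemma dsec_mor_ok (mu : Mor C) :
  TieMorOk (dsec_ob (dom mu)) (dsec_ob (cod mu)) mu (option_map (fmor r) (m_of mu)).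
Proof.
  unfold TieMorOk; simpl. do 2 (split; auto). split.
  - intro F. destruct (marked_true F) as (s & Es).
    destruct (proj2 k_sieve s mu (eq_sym Es)) as (a & Ea).
    apply (marked_of (s := dom a)). rewrite <- Ea, f_dom. reflexivity.
  - unfold counit_tie. destruct (t_of (dom mu)) as [t|] eqn:E1; simpl.
    + apply preimage_some in E1.
      destruct (proj2 j_cosieve t mu (eq_sym E1)) as (m & Em).
      unfold m_of. rewrite (preimage_of j_mor_inj Em). simpl.
      assert (Ed : dom m = t) by (apply j_ob_inj; rewrite <- f_dom, Em; auto).
      unfold t_of. rewrite (preimage_of j_ob_inj (a := cod m)) by (rewrite <- f_cod, Em; auto).
      simpl. rewrite f_dom, f_cod, Ed. do 2 (split; auto).
      rewrite k_mor_eq, <- f_comp by (rewrite !f_cod, eps_dom; reflexivity).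
      rewrite <- eps_nat, Ed, <- Em. apply f_comp. rewrite eps_cod, Ed. reflexivity.
    + destruct (m_of mu) as [m|] eqn:Em; simpl.
      * apply preimage_some in Em. exfalso. apply (preimage_none E1 (a := dom m)).
        rewrite <- Em, f_dom. reflexivity.
      * destruct (t_of (cod mu)); exact I.
Qed.

Definition dsec_mor (mu : Mor C) : TiedMor k := Build_TiedMor (dsec_mor_ok mu).

Lemma dsec_id (c : Ob C) : dsec_mor (idm c) = tied_id (dsec_ob c).
Proof.
  apply TiedMor_ext; simpl.
  - rewrite dom_idm; reflexivity.
  - rewrite cod_idm; reflexivity.
  - reflexivity.
  - unfold id_tiemor. simpl. unfold counit_tie, m_of.
    destruct (t_of c) as [t|] eqn:E; simpl.
    + apply preimage_some in E.
      rewrite (preimage_of j_mor_inj (a := idm t)) by (rewrite f_id, E; reflexivity).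
      simpl. rewrite f_id. reflexivity.
    + destruct (preimage (fmor j) (idm c)) as [m|] eqn:Em; auto. apply preimage_some in Em.
      exfalso. apply (preimage_none E (a := dom m)). rewrite <- f_dom, Em, dom_idm. reflexivity.
Qed.


Lemma dsec_comp (f g : Mor C) : cod f = dom g ->
  dsec_mor (comp g f) = tied_comp (dsec_mor g) (dsec_mor f).
Proof.
  intro Efg.
  assert (E' : ttgt (dsec_mor f) = tsrc (dsec_mor g)) by (simpl; rewrite Efg; reflexivity).
  destruct (tied_comp_spec E') as (A1 & A2 & A3 & A4).
  apply TiedMor_ext.
  - rewrite A1. simpl. rewrite dom_comp by exact Efg. reflexivity.
  - rewrite A2. simpl. rewrite cod_comp by exact Efg. reflexivity.
  - rewrite A3. reflexivity.
  - rewrite A4. simpl. unfold m_of.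
    destruct (preimage (fmor j) f) as [f'|] eqn:Ef.
    + apply preimage_some in Ef.
      destruct (proj2 j_cosieve (cod f') g) as (g' & Eg).
      { rewrite <- f_cod, Ef. symmetry; exact Efg. }
      assert (Ec : cod f' = dom g').
      { apply j_ob_inj. rewrite <- f_cod, <- f_dom, Ef, Eg. exact Efg. }
      rewrite (preimage_of j_mor_inj Eg), (preimage_of j_mor_inj (a := comp g' f')).
      * simpl. rewrite f_comp; auto.
      * rewrite f_comp, Ef, Eg; auto.
    + destruct (preimage (fmor j) (comp g f)) as [h|] eqn:Eh;
        [| destruct (preimage (fmor j) g); reflexivity].
      apply preimage_some in Eh. exfalso.
      destruct (proj2 j_cosieve (dom h) f) as (f' & Ef').
      { rewrite <- f_dom, Eh. symmetry. apply dom_comp. exact Efg. }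
      exact (preimage_none Ef Ef').
Qed.

Definition dsecF : Functor C (Tied k).
Proof.
  refine (@Build_Functor C (Tied k) dsec_ob dsec_mor _ _ _ _).
  - reflexivity.
  - reflexivity.
  - apply dsec_id.
  - apply dsec_comp.
Defined.

Lemma t_of_act (g : G) c : t_of (aob C g c) = option_map (aob T g) (t_of c).
Proof.
  apply preimage_conj with (ga' := aob T (ginv g)) (gb' := aob C (ginv g)).
  - exact j_ob_inj.
  - intro; apply gf_ob.
  - intro; apply gf_ob.
  - intro; apply aob_inv_l.
Qed.

Lemma m_of_act (g : G) mu : m_of (amor C g mu) = option_map (amor T g) (m_of mu).
Proof.
  apply preimage_conj with (ga' := amor T (ginv g)) (gb' := amor C (ginv g)).
  - exact j_mor_inj.
  - intro; apply gf_mor.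
  - intro; apply gf_mor.
  - intro; apply amor_inv_l.
Qed.

Lemma marked_act (g : G) c : marked (aob C g c) = marked c.
Proof.
  unfold marked.
  rewrite (preimage_conj k_ob_inj (ga := aob S g) (ga' := aob S (ginv g))
             (gb' := aob C (ginv g))).
  - destruct (preimage (fob k) c); reflexivity.
  - intro; apply gf_ob.
  - intro; apply gf_ob.
  - intro; apply aob_inv_l.
Qed.

Lemma dsec_ob_act (g : G) c : dsec_ob (aob C g c) = act_tiedob g (dsec_ob c).
Proof.
  apply TiedOb_ext; simpl; auto.
  - unfold counit_tie, act_tie. rewrite t_of_act. destruct (t_of c) as [t|]; simpl; auto.
    rewrite gf_ob, eps_act, gf_mor. reflexivity.
  - apply marked_act.
Qed.

Definition dsec : GFunctor C (Tied k).
Proof.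
  refine {| gf := dsecF |}.
  - intros g c. apply dsec_ob_act.
  - intros g mu. apply TiedMor_ext; simpl.
    + rewrite amor_dom. apply dsec_ob_act.
    + rewrite amor_cod. apply dsec_ob_act.
    + reflexivity.
    + rewrite m_of_act. destruct (m_of mu); simpl; auto. rewrite gf_mor. reflexivity.
Defined.

Lemma dsec_ob_k s : dsec_ob (fob k s) = tie_ob s.
Proof.
  apply TiedOb_ext; simpl; auto.
  - unfold counit_tie, t_of.
    rewrite (preimage_of j_ob_inj (a := fob i s)) by (symmetry; apply k_ob_eq).
    simpl. rewrite ri_ob, eps_i, f_id, <- k_ob_eq. reflexivity.
  - apply (marked_of (s := s)). reflexivity.
Qed.

Lemma dsec_section : DwyerSection dsec.
Proof.
  split; [|split; [|split; [|split]]].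
  - intro c. reflexivity.
  - intro mu. reflexivity.
  - apply dsec_ob_k.
  - intro a. apply TiedMor_ext; simpl.
    + rewrite f_dom. apply dsec_ob_k.
    + rewrite f_cod. apply dsec_ob_k.
    + reflexivity.
    + unfold m_of. rewrite (preimage_of j_mor_inj (a := fmor i a)) by (symmetry; apply k_mor_eq).
      simpl. rewrite ri_mor. reflexivity.
  - intros c s m E. simpl in E. unfold counit_tie in E.
    destruct (t_of c) as [t|] eqn:Et; [|discriminate]. injection E as <- <-.
    apply preimage_some in Et.
    exists (fmor j (eps t)). split; [|split; [reflexivity|]].
    + rewrite f_cod, eps_cod. exact Et.
    + simpl. unfold m_of. rewrite (preimage_of j_mor_inj (a := eps t)) by reflexivity.
      simpl. rewrite r_eps. reflexivity.
Qed.

End SectionOfDwyer.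

Theorem section_of_dwyer (G : Group) (S C : GCat G) (k : GFunctor S C) :
  IsDwyer k -> { Psi : GFunctor C (Tied k) | DwyerSection Psi }.
Proof.
  intro Hk. apply constructive_indefinite_description.
  destruct Hk as [Hk (T & i & j & r & Hji & Hj & _ & (Hri1 & Hri2 & eps & He))].
  destruct He as (He1 & He2 & He3 & He4 & He5).
  eexists. unshelve eapply dsec_section; eassumption.
Qed.

(** * Functoriality of tied objects *)

Section TiedMap.
Variables (G : Group) (S C S' C' : GCat G) (k : GFunctor S C) (k' : GFunctor S' C')
  (FS : GFunctor S S') (FC : GFunctor C C').
Hypotheses (sq_ob : forall s, fob k' (fob FS s) = fob FC (fob k s))
  (sq_mor : forall a, fmor k' (fmor FS a) = fmor FC (fmor k a)).

Definition map_tie (t : option (Ob S * Mor C)) : option (Ob S' * Mor C') :=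
  option_map (fun p => (fob FS (fst p), fmor FC (snd p))) t.

Lemma tmap_ob_ok (x : TiedOb k) : TieOk k' (fob FC (tbase x)) (map_tie (ttie x)) (tmark x).
Proof.
  unfold TieOk, map_tie. destruct (ttie x) as [[s m]|] eqn:E; simpl.
  - destruct (tied_spec E) as (H1 & H2 & H3). rewrite f_dom, f_cod, H1, H2, sq_ob.
    do 2 (split; auto). intro Hz. rewrite H3 by exact Hz. apply f_id.
  - apply untied_unmarked; auto.
Qed.

Definition tmap_ob (x : TiedOb k) : TiedOb k' := Build_TiedOb (tmap_ob_ok x).

Lemma tmap_mor_ok (f : TiedMor k) :
  TieMorOk (tmap_ob (tsrc f)) (tmap_ob (ttgt f)) (fmor FC (tmor f))
           (option_map (fmor FS) (ttiemor f)).
Proof.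
  pose proof (tmor_ok f) as (F1 & F2 & F3 & F4).
  unfold TieMorOk; simpl. rewrite f_dom, f_cod, F1, F2. do 3 (split; auto).
  unfold map_tie.
  destruct (ttie (tsrc f)) as [[s m]|] eqn:E1, (ttie (ttgt f)) as [[s' m']|] eqn:E2,
    (ttiemor f) as [a|]; simpl in *; try contradiction; auto.
  destruct F4 as (A1 & A2 & A3).
  destruct (tied_spec E1) as (H1 & H2 & _), (tied_spec E2) as (H1' & H2' & _).
  rewrite f_dom, f_cod, A1, A2. do 2 (split; auto).
  rewrite sq_mor, <- f_comp by (rewrite f_cod, A2; congruence).
  rewrite <- f_comp by congruence. rewrite A3. reflexivity.
Qed.

Definition tmap_mor (f : TiedMor k) : TiedMor k' := Build_TiedMor (tmap_mor_ok f).

Lemma tmap_comp (f g : TiedMor k) : ttgt f = tsrc g ->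
  tmap_mor (tied_comp g f) = tied_comp (tmap_mor g) (tmap_mor f).
Proof.
  intro E.
  destruct (tied_comp_spec E) as (A1 & A2 & A3 & A4).
  assert (E' : ttgt (tmap_mor f) = tsrc (tmap_mor g)) by (simpl; congruence).
  destruct (tied_comp_spec E') as (B1 & B2 & B3 & B4).
  pose proof (tmor_ok f) as (F1 & F2 & _ & F4).
  pose proof (tmor_ok g) as (H1 & H2 & _ & H4).
  apply TiedMor_ext.
  - rewrite B1. simpl. rewrite A1. reflexivity.
  - rewrite B2. simpl. rewrite A2. reflexivity.
  - rewrite B3. simpl. rewrite A3. apply f_comp. congruence.
  - rewrite B4. simpl. rewrite A4. rewrite E in F4.
    destruct (ttie (tsrc f)) as [[s m]|], (ttie (tsrc g)) as [[s' m']|],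
      (ttie (ttgt g)) as [[s'' m'']|], (ttiemor f) as [a|], (ttiemor g) as [b|];
      simpl in *; try contradiction; auto.
    f_equal. apply f_comp. intuition congruence.
Qed.

Definition tied_mapF : Functor (Tied k) (Tied k').
Proof.
  refine (@Build_Functor (Tied k) (Tied k') tmap_ob tmap_mor _ _ _ _).
  - reflexivity.
  - reflexivity.
  - intro x. apply TiedMor_ext; simpl; auto.
    + apply f_id.
    + unfold id_tiemor; simpl; unfold map_tie.
      destruct (ttie x) as [[s m]|]; simpl; auto. rewrite f_id. auto.
  - apply tmap_comp.
Defined.

Lemma tmap_ob_act (g : G) (x : TiedOb k) : tmap_ob (act_tiedob g x) = act_tiedob g (tmap_ob x).
Proof.
  apply TiedOb_ext; simpl.
  - apply gf_ob.
  - unfold map_tie, act_tie. destruct (ttie x) as [[s m]|]; simpl; auto.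
    rewrite gf_ob, gf_mor. reflexivity.
  - reflexivity.
Qed.

Definition tied_map : GFunctor (Tied k) (Tied k').
Proof.
  refine {| gf := tied_mapF |}.
  - apply tmap_ob_act.
  - intros g f. apply TiedMor_ext; simpl; rewrite ?tmap_ob_act; auto.
    + apply gf_mor.
    + destruct (ttiemor f); simpl; auto. rewrite gf_mor. reflexivity.
Defined.

Lemma tied_map_tie_ob s : tmap_ob (tie_ob s) = tie_ob (fob FS s).
Proof. apply TiedOb_ext; simpl; unfold map_tie; simpl; rewrite ?f_id, ?sq_ob; reflexivity. Qed.

Lemma tied_map_tie_mor a : tmap_mor (tie_mor a) = tie_mor (fmor FS a).
Proof.
  apply TiedMor_ext; simpl.
  - rewrite f_dom. apply tied_map_tie_ob.
  - rewrite f_cod. apply tied_map_tie_ob.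
  - symmetry. apply sq_mor.
  - reflexivity.
Qed.

Lemma tied_map_counit_lifts (B : GCat G) (A : GFunctor B (Tied k)) :
  CounitLifts A -> CounitLifts (compGF tied_map A).
Proof.
  intros H b s' m' E. simpl in E. unfold map_tie in E. fold_tied.
  destruct (ttie (fob A b : TiedOb k)) as [[s m]|] eqn:E0; [|discriminate].
  simpl in E. injection E as <- <-.
  destruct (H b s m E0) as (mt & C1 & C2 & C3).
  exists mt. split; auto. simpl. fold_tied. rewrite C2, C3. simpl. rewrite f_id. auto.
Qed.

End TiedMap.

(* Given [A : B -> Tied k'] over [F o k], a [k]-tie [k b -> c] is composed with
   the [k']-tie of [A b]: this extends [A] along [Tied k -> Tied k'] and is how
   Dwyer sections are composed. *)
Section TiedExtension.
Variables (G : Group) (B C S' C' : GCat G) (k : GFunctor B C) (k' : GFunctor S' C')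
  (F : GFunctor C C') (A : GFunctor B (Tied k')).
Hypotheses (A_base_ob : forall b, tbase (fob A b : TiedOb k') = fob F (fob k b))
  (A_base_mor : forall be, tmor (fmor A be : TiedMor k') = fmor F (fmor k be)).

Definition ext_tie (x : TiedOb k) : option (Ob S' * Mor C') :=
  match ttie x with
  | None => None
  | Some (b, m2) => match ttie (fob A b : TiedOb k') with
                    | Some (s, m1) => Some (s, comp (fmor F m2) m1)
                    | None => None
                    end
  end.

Definition ext_mark (x : TiedOb k) : bool :=
  match ttie x with
  | None => false
  | Some (b, m2) => match ttie (fob A b : TiedOb k') with
                    | Some _ => tmark x && tmark (fob A b : TiedOb k')
                    | None => false
                    end
  end.

Lemma ext_ob_ok (x : TiedOb k) : TieOk k' (fob F (tbase x)) (ext_tie x) (ext_mark x).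
Proof.
  unfold TieOk, ext_tie, ext_mark. destruct (ttie x) as [[b m2]|] eqn:E; auto.
  destruct (tied_spec E) as (H1 & H2 & H3).
  destruct (ttie (fob A b : TiedOb k')) as [[s m1]|] eqn:E'; auto.
  destruct (tied_spec E') as (K1 & K2 & K3).
  assert (Hc : cod m1 = dom (fmor F m2)) by (rewrite f_dom, H1, K2, A_base_ob; reflexivity).
  rewrite dom_comp, cod_comp, f_cod, H2 by exact Hc. do 2 (split; auto).
  intro Hz. apply andb_prop in Hz. destruct Hz as [Z1 Z2].
  rewrite H3, K3, f_id by assumption.
  rewrite <- A_base_ob, <- K2, K3, cod_idm by assumption.
  apply comp_id_l_eq, cod_idm.
Qed.

Definition ext_ob (x : TiedOb k) : TiedOb k' := Build_TiedOb (ext_ob_ok x).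

Definition ext_tiemor (f : TiedMor k) : option (Mor S') :=
  match ttiemor f with Some be => ttiemor (fmor A be : TiedMor k') | None => None end.

Lemma A_dom be : tsrc (fmor A be : TiedMor k') = fob A (dom be).
Proof. apply (f_dom A). Qed.

Lemma A_cod be : ttgt (fmor A be : TiedMor k') = fob A (cod be).
Proof. apply (f_cod A). Qed.

Lemma ext_mark_mono (f : TiedMor k) :
  ext_mark (ttgt f) = true -> ext_mark (tsrc f) = true.
Proof.
  intro Z. pose proof (tmor_ok f) as (_ & _ & F3 & F4). unfold ext_mark in *.
  destruct (ttie (ttgt f)) as [[b' m2']|] eqn:E2; [|discriminate].
  destruct (ttie (fob A b' : TiedOb k')) as [[s' m1']|] eqn:E4; [|discriminate].
  apply andb_prop in Z. destruct Z as [Z1 Z2]. specialize (F3 Z1).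
  destruct (ttie (tsrc f)) as [[b m2]|] eqn:E1;
    [| rewrite (untied_unmarked E1) in F3; discriminate].
  simpl in F4. destruct (ttiemor f) as [be|]; [|contradiction].
  destruct F4 as (B1 & B2 & _).
  pose proof (tmor_ok (fmor A be : TiedMor k')) as (_ & _ & G3 & _). fold_tied.
  rewrite A_dom, B1, A_cod, B2 in G3. specialize (G3 Z2).
  destruct (ttie (fob A b : TiedOb k')) eqn:E3.
  - rewrite F3, G3. reflexivity.
  - rewrite (untied_unmarked E3) in G3. discriminate.
Qed.

Lemma ext_square (f : TiedMor k) :
  TieSquare k' (ext_tie (tsrc f)) (ext_tie (ttgt f)) (fmor F (tmor f)) (ext_tiemor f).
Proof.
  pose proof (tmor_ok f) as (F1 & F2 & _ & F4). unfold ext_tie, ext_tiemor.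
  destruct (ttie (tsrc f)) as [[b m2]|] eqn:E1;
    [| destruct (ttiemor f); [contradiction | exact I]].
  destruct (ttie (ttgt f)) as [[b' m2']|] eqn:E2; [|destruct (ttiemor f); contradiction].
  destruct (ttiemor f) as [be|]; [|contradiction].
  destruct F4 as (B1 & B2 & B3).
  pose proof (tmor_ok (fmor A be : TiedMor k')) as (_ & _ & _ & G4). fold_tied.
  rewrite A_dom, B1, A_cod, B2 in G4.
  destruct (tied_spec E1) as (H1 & H2 & _), (tied_spec E2) as (H1' & H2' & _).
  destruct (ttie (fob A b : TiedOb k')) as [[s m1]|] eqn:E3;
    [| destruct (ttiemor (fmor A be : TiedMor k')); [contradiction|];
       destruct (ttie (fob A b' : TiedOb k')) as [[? ?]|]; exact I].
  destruct (ttie (fob A b' : TiedOb k')) as [[s' m1']|] eqn:E4;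
    [| destruct (ttiemor (fmor A be : TiedMor k')); contradiction].
  destruct (ttiemor (fmor A be : TiedMor k')) as [ga|]; [|contradiction].
  destruct G4 as (C1 & C2 & C3).
  destruct (tied_spec E3) as (K1 & K2 & _), (tied_spec E4) as (K1' & K2' & _).
  do 2 (split; auto). rewrite A_base_mor in C3.
  rewrite <- comp_assoc; [| rewrite f_cod, C2; congruence
                          | rewrite K2', A_base_ob, f_dom, H1'; reflexivity].
  rewrite C3, comp_assoc; [| rewrite K2, A_base_ob, !f_dom, B1; reflexivity
                           | rewrite !f_cod, !f_dom, H1', B2; reflexivity].
  rewrite <- f_comp, B3, f_comp by (rewrite ?f_cod; congruence).
  symmetry. apply comp_assoc.
  - rewrite K2, A_base_ob, !f_dom, H1. reflexivity.
  - rewrite !f_cod, !f_dom. congruence.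
Qed.

Lemma ext_mor_ok (f : TiedMor k) :
  TieMorOk (ext_ob (tsrc f)) (ext_ob (ttgt f)) (fmor F (tmor f)) (ext_tiemor f).
Proof.
  pose proof (tmor_ok f) as (F1 & F2 & _ & _).
  unfold TieMorOk; simpl. rewrite f_dom, f_cod, F1, F2. do 2 (split; auto). split.
  - apply ext_mark_mono.
  - apply ext_square.
Qed.

Definition ext_mor (f : TiedMor k) : TiedMor k' := Build_TiedMor (ext_mor_ok f).

Lemma ext_id (x : TiedOb k) : ext_mor (tied_id x) = tied_id (ext_ob x).
Proof.
  apply TiedMor_ext; simpl; auto.
  - apply f_id.
  - unfold ext_tiemor; simpl; unfold id_tiemor.
    destruct (ttie x) as [[b m2]|] eqn:Ex; simpl; unfold ext_tie; rewrite Ex; auto.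
    rewrite (f_id A). simpl. unfold id_tiemor. fold_tied.
    destruct (ttie (fob A b : TiedOb k')) as [[s m1]|]; reflexivity.
Qed.

Lemma ext_comp (f g : TiedMor k) : ttgt f = tsrc g ->
  ext_mor (tied_comp g f) = tied_comp (ext_mor g) (ext_mor f).
Proof.
  intro E.
  destruct (tied_comp_spec E) as (A1 & A2 & A3 & A4).
  assert (E' : ttgt (ext_mor f) = tsrc (ext_mor g)) by (simpl; congruence).
  destruct (tied_comp_spec E') as (B1 & B2 & B3 & B4).
  pose proof (tmor_ok f) as (F1 & F2 & _ & F4).
  pose proof (tmor_ok g) as (G1 & _ & _ & G4).
  apply TiedMor_ext.
  - rewrite B1. simpl. rewrite A1. reflexivity.
  - rewrite B2. simpl. rewrite A2. reflexivity.
  - rewrite B3. simpl. rewrite A3. apply f_comp. congruence.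
  - rewrite B4. simpl. unfold ext_tiemor. rewrite A4. rewrite E in F4.
    destruct (ttie (tsrc f)) as [[s m]|], (ttie (tsrc g)) as [[s' m']|],
      (ttie (ttgt g)) as [[s'' m'']|], (ttiemor f) as [a|], (ttiemor g) as [b|];
      simpl in *; try contradiction; auto.
    + assert (Eab : cod a = dom b) by intuition congruence.
      rewrite (f_comp A) by exact Eab.
      assert (Ex : ttgt (fmor A a : TiedMor k') = tsrc (fmor A b : TiedMor k')).
      { fold_tied. rewrite A_dom, A_cod, Eab. reflexivity. }
      fold_tied. destruct (tied_comp_spec Ex) as (_ & _ & _ & X4).
      change (@comp (gc (Tied k'))) with (@tied_comp _ _ _ k'). rewrite X4. reflexivity.
    + match goal with |- context [option_comp ?x None] => destruct x; reflexivity end.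
Qed.

Definition tied_extendF : Functor (Tied k) (Tied k').
Proof.
  refine (@Build_Functor (Tied k) (Tied k') ext_ob ext_mor _ _ _ _).
  - reflexivity.
  - reflexivity.
  - apply ext_id.
  - apply ext_comp.
Defined.

Lemma ext_ob_act (g : G) x : ext_ob (act_tiedob g x) = act_tiedob g (ext_ob x).
Proof.
  apply TiedOb_ext; simpl.
  - apply gf_ob.
  - unfold ext_tie, act_tie. simpl. destruct (ttie x) as [[b m2]|] eqn:E; simpl; auto.
    rewrite (gf_ob A). simpl. unfold act_tie. fold_tied.
    destruct (ttie (fob A b : TiedOb k')) as [[s m1]|] eqn:E'; simpl; auto.
    destruct (tied_spec E) as (H1 & _), (tied_spec E') as (K1 & K2 & _).
    rewrite gf_mor, amor_comp; auto. rewrite f_dom, H1, K2, A_base_ob. reflexivity.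
  - unfold ext_mark. simpl. unfold act_tie. destruct (ttie x) as [[b m2]|]; simpl; auto.
    rewrite (gf_ob A). simpl. unfold act_tie. fold_tied.
    destruct (ttie (fob A b : TiedOb k')) as [[s m1]|]; simpl; auto.
Qed.

Definition tied_extend : GFunctor (Tied k) (Tied k').
Proof.
  refine {| gf := tied_extendF |}.
  - intros g x. apply ext_ob_act.
  - intros g f. apply TiedMor_ext; simpl.
    + apply ext_ob_act.
    + apply ext_ob_act.
    + apply gf_mor.
    + unfold ext_tiemor. simpl. destruct (ttiemor f) as [be|]; simpl; auto.
      rewrite (gf_mor A). reflexivity.
Defined.

Lemma tied_extend_tie_ob b : ext_ob (tie_ob b) = fob A b.
Proof.
  apply TiedOb_ext; simpl.
  - symmetry. apply A_base_ob.
  - unfold ext_tie. simpl. fold_tied.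
    destruct (ttie (fob A b : TiedOb k')) as [[s m1]|] eqn:E; auto.
    rewrite f_id, comp_id_l_eq; auto.
    destruct (tied_spec E) as (_ & K2 & _). rewrite K2, A_base_ob. reflexivity.
  - unfold ext_mark. simpl. fold_tied.
    destruct (ttie (fob A b : TiedOb k')) as [[s m1]|] eqn:E; auto.
    symmetry. apply (untied_unmarked E).
Qed.

Lemma tied_extend_tie_mor be : ext_mor (tie_mor be) = fmor A be.
Proof.
  apply TiedMor_ext; simpl.
  - rewrite tied_extend_tie_ob. symmetry. apply A_dom.
  - rewrite tied_extend_tie_ob. symmetry. apply A_cod.
  - symmetry. apply A_base_mor.
  - reflexivity.
Qed.

(* The counit of the composite is the composite of the counits. *)
Lemma tied_extend_counit_lifts (Psi : GFunctor C (Tied k)) :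
  DwyerSection Psi -> CounitLifts A -> CounitLifts (compGF tied_extend Psi).
Proof.
  intros (D1 & D2 & D3 & D4 & D5) PA c s m E. simpl in E. unfold ext_tie in E. fold_tied.
  destruct (ttie (fob Psi c : TiedOb k)) as [[b m2]|] eqn:E1; [|discriminate].
  destruct (ttie (fob A b : TiedOb k')) as [[s0 m1]|] eqn:E2; [|discriminate].
  injection E as <- <-.
  destruct (PA b s0 m1 E2) as (mt1 & C1 & C2 & C3).
  destruct (D5 c b m2 E1) as (mt2 & C1' & C2' & C3').
  rewrite D2 in C2'. subst mt2.
  destruct (tied_spec E1) as (H1 & H2 & _).
  assert (Ec : cod (fmor k mt1) = dom m2) by (rewrite f_cod, C1, H1; reflexivity).
  exists (comp m2 (fmor k mt1)). split; [rewrite cod_comp by exact Ec; exact C1'|].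
  set (Phi := compGF tied_extend Psi).
  rewrite (f_comp Phi) by exact Ec.
  set (X1 := fmor Phi m2). set (X2 := fmor Phi (fmor k mt1)).
  assert (Ex : ttgt (X2 : TiedMor k') = tsrc (X1 : TiedMor k')).
  { transitivity (fob Phi (cod (fmor k mt1))); [apply (f_cod Phi)|].
    rewrite Ec. symmetry. apply (f_dom Phi). }
  change (@comp (gc (Tied k')) X1 X2) with (tied_comp X1 X2).
  destruct (tied_comp_spec Ex) as (_ & _ & X3 & X4). rewrite X3, X4.
  assert (EX2 : X2 = fmor A mt1)
    by (unfold X2, Phi; simpl; fold_tied; rewrite D4; apply tied_extend_tie_mor).
  assert (EX1m : tmor (X1 : TiedMor k') = fmor F m2)
    by (unfold X1, Phi; simpl; fold_tied; rewrite D2; reflexivity).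
  assert (EX1g : ttiemor (X1 : TiedMor k') = Some (idm s0)).
  { unfold X1, Phi; simpl; unfold ext_tiemor. fold_tied.
    rewrite C3', (f_id A). simpl. unfold id_tiemor. fold_tied. rewrite E2. reflexivity. }
  rewrite EX2, EX1m, EX1g. fold_tied. rewrite C2, C3. split; auto.
  simpl. f_equal. apply comp_id_l_eq, cod_idm.
Qed.

End TiedExtension.

Lemma tie_incl_counit_lifts (G : Group) (S C : GCat G) (k : GFunctor S C) :
  CounitLifts (tie_incl k).
Proof.
  intros b s m E. simpl in E. injection E as <- <-.
  exists (idm b). split; [apply cod_idm|]. split; [apply f_id | reflexivity].
Qed.

(** * Closure properties *)

Lemma counit_lifts_along (G : Group) (S C D B : GCat G) (k : GFunctor S C)
  (Psi : GFunctor D (Tied k)) (F : GFunctor B D) (A : GFunctor B (Tied k)) :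
  FCompEq Psi F A -> CounitLifts A ->
  forall b s m, ttie (fob Psi (fob F b) : TiedOb k) = Some (s, m) ->
    exists mt, cod mt = fob F b /\ tmor (fmor Psi mt : TiedMor k) = m /\
               ttiemor (fmor Psi mt : TiedMor k) = Some (idm s).
Proof.
  intros [E1 E2] HA b s m E. rewrite E1 in E. destruct (HA b s m E) as (mt & C1 & C2 & C3).
  exists (fmor F mt). rewrite E2, f_cod, C1. auto.
Qed.

Theorem dwyer_comp (G : Group) (A B C : GCat G) (k1 : GFunctor A B) (k2 : GFunctor B C) :
  IsDwyer k1 -> IsDwyer k2 -> IsDwyer (compGF k2 k1).
Proof.
  intros D1 D2.
  destruct (section_of_dwyer D1) as (Psi1 & E1 & E2 & E3 & E4 & E5).
  destruct (section_of_dwyer D2) as (Psi2 & H1 & H2 & H3 & H4 & H5).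
  set (A1 := compGF (tied_map (k' := compGF k2 k1) (FS := idG A) (FC := k2)
                       (fun s => eq_refl) (fun a => eq_refl)) Psi1).
  assert (HA1 : forall b, tbase (fob A1 b : TiedOb _) = fob (idG C) (fob k2 b))
    by (intro b; simpl; fold_tied; rewrite E1; reflexivity).
  assert (HA2 : forall be, tmor (fmor A1 be : TiedMor _) = fmor (idG C) (fmor k2 be))
    by (intro b; simpl; fold_tied; rewrite E2; reflexivity).
  apply (dwyer_of_section (Psi := compGF (tied_extend HA1 HA2) Psi2)).
  split; [|split; [|split; [|split]]].
  - intro c. simpl. fold_tied. apply H1.
  - intro c. simpl. fold_tied. apply H2.
  - intro s. simpl. fold_tied. rewrite H3, tied_extend_tie_ob.
    unfold A1. simpl. fold_tied. rewrite E3. apply tied_map_tie_ob.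
  - intro a. simpl. fold_tied. rewrite H4, tied_extend_tie_mor.
    unfold A1. simpl. fold_tied. rewrite E4. apply tied_map_tie_mor.
  - apply tied_extend_counit_lifts.
    + repeat split; assumption.
    + apply tied_map_counit_lifts, E5.
Qed.

Section Colimits.
Variables (G : Group) (P : GCat G -> Prop).
Hypothesis P_tied : forall (S C : GCat G) (k : GFunctor S C), P S -> P C -> P (Tied k).
Hypothesis P_full : forall (D : GCat G) (Q : Ob D -> Prop)
  (HQ : forall g d, Q d -> Q (aob D g d)), P D -> P (FullSub HQ).

Section Family.
Variables (I : Type) (B : I -> GCat G) (D : GCat G) (F : forall i, GFunctor (B i) D).

Definition JointlyEpi : Prop :=
  forall X, P X -> forall u u' : GFunctor D X,
    (forall i, FCompEq u (F i) (compGF u' (F i))) -> FEq u u'.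

(* Colimit cocones have this property because a cocone factoring through a
   subobject is again a cocone. *)
Definition CoversSubobjects : Prop :=
  forall X, P X -> forall (e : GFunctor X D) (a : forall i, GFunctor (B i) X),
    IsInclusion e -> (forall i, FCompEq e (a i) (F i)) ->
    exists u : GFunctor D X, forall i, FCompEq u (F i) (a i).

Lemma jointly_surjective : P D -> JointlyEpi -> CoversSubobjects ->
  forall d, exists i b, fob (F i) b = d.
Proof.
  intros PD Hepi Hcov.
  set (Q := fun d => exists i b, fob (F i) b = d).
  assert (HQ : forall g d, Q d -> Q (aob D g d)).
  { intros g d (i & b & Eb). exists i, (aob (B i) g b). rewrite gf_ob; congruence. }
  assert (QF : forall i b, Q (fob (F i) b)) by (intros i b; exists i, b; reflexivity).
  destruct (Hcov _ (P_full HQ PD) (full_incl HQ) (fun i => full_corestr HQ (QF i))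
              (full_incl_inclusion HQ) (fun i => conj (fun _ => eq_refl) (fun _ => eq_refl)))
    as [u Hu].
  assert (Hid : FEq (compGF (full_incl HQ) u) (idG D)).
  { apply Hepi; [exact PD|]. intro i. split; intro b; simpl.
    - rewrite (proj1 (Hu i)). reflexivity.
    - rewrite (proj2 (Hu i)). reflexivity. }
  intro d. pose proof (proj1 Hid d) as Ed. simpl in Ed. rewrite <- Ed.
  exact (proj2_sig (fob u d)).
Qed.

Lemma dwyer_of_cover (S : GCat G) (k : GFunctor S D) (Psi : GFunctor D (Tied k))
  (A : forall i, GFunctor (B i) (Tied k)) :
  P D -> JointlyEpi -> CoversSubobjects ->
  FCompEq Psi k (tie_incl k) ->
  (forall i, FCompEq Psi (F i) (A i)) ->
  (forall i, FCompEq (tied_base k) (A i) (F i)) ->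
  (forall i, CounitLifts (A i)) ->
  IsDwyer k.
Proof.
  intros PD Hepi Hcov [Hk1 Hk2] HA Hbase Hlift.
  assert (Hpi : FEq (compGF (tied_base k) Psi) (idG D)).
  { apply Hepi; [exact PD|]. intro i. split; intro b; simpl.
    - rewrite (proj1 (HA i)). apply (proj1 (Hbase i)).
    - rewrite (proj2 (HA i)). apply (proj2 (Hbase i)). }
  apply (dwyer_of_section (Psi := Psi)).
  split; [apply (proj1 Hpi)|]. split; [apply (proj2 Hpi)|].
  split; [exact Hk1|]. split; [exact Hk2|].
  intros d s m E.
  destruct (jointly_surjective PD Hepi Hcov d) as (i & b & <-).
  exact (counit_lifts_along (HA i) (Hlift i) E).
Qed.

End Family.

Definition bool_family (X Y Z : GCat G) (u : GFunctor X Z) (v : GFunctor Y Z) :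
  forall b : bool, GFunctor (if b then X else Y) Z :=
  fun b => match b as b0 return GFunctor (if b0 then X else Y) Z with
           | true => u
           | false => v
           end.

Section Pushout.
Variables (K L C D : GCat G) (j : GFunctor K L) (f : GFunctor K C)
  (k : GFunctor C D) (h : GFunctor L D).
Hypothesis HP : IsPushout P j f k h.

Lemma pushout_jointly_epi : JointlyEpi (bool_family k h).
Proof.
  intros X PX u u' Hu. destruct HP as (_ & Sq1 & Sq2 & UP).
  destruct (UP X PX (compGF u' k) (compGF u' h)) as [_ U].
  - intro x. simpl. rewrite Sq1. reflexivity.
  - intro m. simpl. rewrite Sq2. reflexivity.
  - apply U; [exact (Hu true) | exact (Hu false) | split; intro; reflexivity ..].
Qed.

Lemma pushout_covers_subobjects : CoversSubobjects (bool_family k h).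
Proof.
  intros X PX e a He Ha. destruct HP as (_ & Sq1 & Sq2 & UP).
  destruct (UP X PX (a true) (a false)) as [[u [Uk Uh]] _].
  - intro x. apply (proj1 He). rewrite (proj1 (Ha true)), (proj1 (Ha false)). apply Sq1.
  - intro m. apply (proj2 He). rewrite (proj2 (Ha true)), (proj2 (Ha false)). apply Sq2.
  - exists u. intros []; assumption.
Qed.

Theorem dwyer_pushout : P C -> IsDwyer j -> IsDwyer k.
Proof.
  intros PC Dj. pose proof HP as (PD & Sq1 & Sq2 & UP).
  destruct (section_of_dwyer Dj) as (Psij & J1 & J2 & J3 & J4 & J5).
  set (b := compGF (tied_map Sq1 Sq2) Psij).
  destruct (UP (Tied k) (P_tied k PC PD) (tie_incl k) b) as [[Psi [Hk Hh]] _].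
  - intro x. simpl. fold_tied. rewrite J3. symmetry. apply tied_map_tie_ob.
  - intro m. simpl. fold_tied. rewrite J4. symmetry. apply tied_map_tie_mor.
  - apply (dwyer_of_cover (F := bool_family k h) (Psi := Psi)
             (A := bool_family (tie_incl k) b)).
    + exact PD.
    + apply pushout_jointly_epi.
    + apply pushout_covers_subobjects.
    + exact Hk.
    + intros []; assumption.
    + intros []; split; intro; simpl; fold_tied; rewrite ?J1, ?J2; reflexivity.
    + intros []; [apply tie_incl_counit_lifts | apply tied_map_counit_lifts, J5].
Qed.

End Pushout.

Section Coproduct.
Variables (I : Type) (X : I -> GCat G) (Q : GCat G) (iota : forall i, GFunctor (X i) Q).
Hypothesis HQ : IsCoproduct P iota.

Lemma coproduct_jointly_epi : JointlyEpi iota.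
Proof.
  intros Y PY u u' Hu. destruct HQ as [_ UQ].
  apply (proj2 (UQ Y PY (fun i => compGF u' (iota i)))); [exact Hu|].
  intro i. split; intro; reflexivity.
Qed.

Lemma coproduct_covers_subobjects : CoversSubobjects iota.
Proof. intros Y PY e a _ _. destruct HQ as [_ UQ]. exact (proj1 (UQ Y PY a)). Qed.

End Coproduct.

Theorem dwyer_coprod (I : Type) (S C : I -> GCat G) (k : forall i, GFunctor (S i) (C i))
  (QS QC : GCat G) (iS : forall i, GFunctor (S i) QS) (iC : forall i, GFunctor (C i) QC)
  (kappa : GFunctor QS QC) :
  (forall i, IsDwyer (k i)) -> IsCoproduct P iS -> IsCoproduct P iC ->
  (forall i, FCompEq kappa (iS i) (compGF (iC i) (k i))) ->
  IsDwyer kappa.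
Proof.
  intros Dk HS HC Hka. pose proof HS as [PQS US]. pose proof HC as [PQC UC].
  set (Psis := fun i => proj1_sig (section_of_dwyer (Dk i))).
  assert (HPs : forall i, DwyerSection (Psis i))
    by (intro i; exact (proj2_sig (section_of_dwyer (Dk i)))).
  set (A := fun i => compGF (tied_map (FS := iS i) (FC := iC i)
                               (proj1 (Hka i)) (proj2 (Hka i))) (Psis i)).
  destruct (proj1 (UC _ (P_tied kappa PQS PQC) A)) as [Psi HA].
  assert (Hk : FEq (compGF Psi kappa) (tie_incl kappa)).
  { apply (coproduct_jointly_epi HS); [apply P_tied; assumption|].
    intro i. destruct (HPs i) as (_ & _ & E3 & E4 & _). split; intro x; simpl.
    - rewrite (proj1 (Hka i)). simpl. rewrite (proj1 (HA i)). simpl. fold_tied. rewrite E3.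
      apply tied_map_tie_ob.
    - rewrite (proj2 (Hka i)). simpl. rewrite (proj2 (HA i)). simpl. fold_tied. rewrite E4.
      apply tied_map_tie_mor. }
  apply (dwyer_of_cover (F := iC) (Psi := Psi) (A := A)).
  - exact PQC.
  - apply coproduct_jointly_epi, HC.
  - apply coproduct_covers_subobjects, HC.
  - exact Hk.
  - exact HA.
  - intro i. destruct (HPs i) as (E1 & E2 & _). split; intro; simpl; fold_tied.
    + rewrite E1. reflexivity.
    + rewrite E2. reflexivity.
  - intro i. apply tied_map_counit_lifts. apply (HPs i).
Qed.

Section SequentialColimit.
Variables (C : nat -> GCat G) (k : forall n, GFunctor (C n) (C (S n)))
  (L : GCat G) (lam : forall n, GFunctor (C n) L).
Hypothesis HL : IsSeqColim P k lam.

Lemma seq_jointly_epi : JointlyEpi lam.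
Proof.
  intros X PX u u' Hu. destruct HL as (_ & Hlam & UL).
  destruct (UL X PX (fun n => compGF u' (lam n))) as [_ U].
  - intro n. split; intro x; simpl; [rewrite (proj1 (Hlam n)) | rewrite (proj2 (Hlam n))];
      reflexivity.
  - apply U; [exact Hu |]. intro n. split; intro; reflexivity.
Qed.

Lemma seq_covers_subobjects : CoversSubobjects lam.
Proof.
  intros X PX e a He Ha. destruct HL as (_ & Hlam & UL).
  destruct (UL X PX a) as [Hex _]; [|exact Hex]. intro n. split; intro x.
  - apply (proj1 He). rewrite (proj1 (Ha (S n))), (proj1 (Ha n)). apply (proj1 (Hlam n)).
  - apply (proj2 He). rewrite (proj2 (Ha (S n))), (proj2 (Ha n)). apply (proj2 (Hlam n)).
Qed.

Hypothesis Dk : forall n, IsDwyer (k n).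

Let lam_cocone : forall n, FCompEq (lam (S n)) (k n) (lam n) := proj1 (proj2 HL).

Definition seq_section n : GFunctor (C (S n)) (Tied (k n)) :=
  proj1_sig (section_of_dwyer (Dk n)).

Lemma seq_section_spec n : DwyerSection (seq_section n).
Proof. exact (proj2_sig (section_of_dwyer (Dk n))). Qed.

Definition StageOk n (A : GFunctor (C n) (Tied (lam 0))) : Prop :=
  FCompEq (tied_base (lam 0)) A (lam n) /\ CounitLifts A.
Arguments StageOk n A : clear implicits.

Section Step.
Variables (n : nat) (A : GFunctor (C n) (Tied (lam 0))) (HA : StageOk n A).

Lemma stage_base_ob b : tbase (fob A b : TiedOb _) = fob (lam (S n)) (fob (k n) b).
Proof. exact (eq_trans (proj1 (proj1 HA) b) (eq_sym (proj1 (lam_cocone n) b))). Qed.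

Lemma stage_base_mor m : tmor (fmor A m : TiedMor _) = fmor (lam (S n)) (fmor (k n) m).
Proof. exact (eq_trans (proj2 (proj1 HA) m) (eq_sym (proj2 (lam_cocone n) m))). Qed.

Definition stage_step : GFunctor (C (S n)) (Tied (lam 0)) :=
  compGF (tied_extend stage_base_ob stage_base_mor) (seq_section n).

Lemma stage_step_ok : StageOk (S n) stage_step.
Proof.
  destruct (seq_section_spec n) as (E1 & E2 & E3 & E4 & E5).
  split; [split|].
  - intro c. simpl. fold_tied. rewrite E1. reflexivity.
  - intro m. simpl. fold_tied. rewrite E2. reflexivity.
  - apply tied_extend_counit_lifts; [repeat split; assumption | exact (proj2 HA)].
Qed.

Lemma stage_step_cocone : FCompEq stage_step (k n) A.
Proof.
  destruct (seq_section_spec n) as (E1 & E2 & E3 & E4 & E5).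
  split; intro x; simpl; fold_tied.
  - rewrite E3. apply tied_extend_tie_ob.
  - rewrite E4. apply tied_extend_tie_mor.
Qed.

End Step.

Lemma stage0_ok : StageOk 0 (tie_incl (lam 0)).
Proof.
  split; [split; intro; reflexivity | apply tie_incl_counit_lifts].
Qed.

Fixpoint stage n : { A : GFunctor (C n) (Tied (lam 0)) | StageOk n A } :=
  match n as n0 return { A : GFunctor (C n0) (Tied (lam 0)) | StageOk n0 A } with
  | 0 => exist _ (tie_incl (lam 0)) stage0_ok
  | S n' => exist _ (stage_step (proj2_sig (stage n'))) (stage_step_ok (proj2_sig (stage n')))
  end.

Theorem dwyer_seq : P (C 0) -> IsDwyer (lam 0).
Proof.
  intro PC0. pose proof HL as (PL & Hlam & UL).
  set (A := fun n => proj1_sig (stage n)).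
  destruct (UL _ (P_tied (lam 0) PC0 PL) A) as [[Psi HA] _].
  { intro n. apply stage_step_cocone. }
  apply (dwyer_of_cover (F := lam) (Psi := Psi) (A := A)).
  - exact PL.
  - apply seq_jointly_epi.
  - apply seq_covers_subobjects.
  - exact (HA 0).
  - exact HA.
  - intro n. exact (proj1 (proj2_sig (stage n))).
  - intro n. exact (proj2 (proj2_sig (stage n))).
Qed.

End SequentialColimit.

Theorem dwyer_closure :
  DwyerClosureProps P.
Proof.
  split; [|split; [|split]].
  - intros A B C k1 k2 _ _ _. apply dwyer_comp.
  - intros I S C k _ _ Dk QS QC iS iC HS HC kappa Hka. exact (dwyer_coprod Dk HS HC Hka).
  - intros K L C D j f k h _ _ PC Dj HP. exact (dwyer_pushout HP PC Dj).
  - intros C k PC Dk L lam HL. exact (dwyer_seq HL Dk (PC 0)).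
Qed.

End Colimits.

Theorem lemma4p4 (G : Group) :
  DwyerClosureProps (@inGCat G) /\ DwyerClosureProps (@inGPos G).
Proof.
  split; apply dwyer_closure.
  - intros; exact I.
  - intros; exact I.
  - intros S C k PS PC. apply Tied_poset; assumption.
  - intros D Q HQ PD. apply FullSub_poset; assumption.
Qed.
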